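(* Let $f \in \mathcal{C}_{2\pi}$, let $A_n[f]$ be the Toeplitz matrix generated by $f$ and $c_n[f]$ the optimal circulant preconditioner for $A_n[f]$. For every $\epsilon>0$ there exist positive integers $N$ and $M$ such that for every $n>N$ there are matrices $\mathscr R_n[f],\mathscr E_n[f]\in\mathbb{C}^{n\times n}$ with \[ \cos c_n[f]-\cos A_n[f] = \mathscr R_n[f]+\mathscr E_n[f],\qquad \operatorname{rank}\mathscr R_n[f]\le 2M,\qquad \|\mathscr E_n[f]\|_2\le\epsilon. \]
   Context: $\mathcal{C}_{2\pi}$ denotes the Banach space of all $2\pi$-periodic continuous complex-valued functions on $\mathbb{R}$ with the supremum norm $\|\cdot\|_\infty$. For $f\in\mathcal{C}_{2\pi}$ its Fourier coefficients are $a_k=\frac{1}{2\pi}\int_{-\pi}^{\pi} f(\theta)e^{-\mathbf{i}k\theta}\,d\theta$, $k\in\mathbb{Z}$. The Toeplitz matrix generated by $f$ is the $n\times n$ matrix $A_n[f]$ whose $(j,k)$ entry is $a_{j-k}$. The optimal circulant preconditioner $c_n[f]$ is the $n\times n$ circulant matrix whose $(j,k)$ entry is $c_{(j-k)\bmod n}$, where $c_k=\frac{(n-k)a_k+k\,a_{k-n}}{n}$ for $0\le k<n$. For a square matrix $X$, $\cos X=\sum_{m\ge0}\frac{(-1)^m}{(2m)!}X^{2m}$. $\|\cdot\|_2$ is the spectral norm. *)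

From Stdlib Require Import Reals Lra ZArith Classical ClassicalEpsilon.
Open Scope R_scope.

Definition Cpx := (R * R)%type.
Definition C0 : Cpx := (0, 0).
Definition C1 : Cpx := (1, 0).
Definition Cadd (z w : Cpx) : Cpx := (fst z + fst w, snd z + snd w).
Definition Copp (z : Cpx) : Cpx := (- fst z, - snd z).
Definition Csub (z w : Cpx) : Cpx := Cadd z (Copp w).
Definition Cmul (z w : Cpx) : Cpx :=
  (fst z * fst w - snd z * snd w, fst z * snd w + snd z * fst w).
Definition Cscale (r : R) (z : Cpx) : Cpx := (r * fst z, r * snd z).
Definition Cmod2 (z : Cpx) : R := fst z * fst z + snd z * snd z.

Fixpoint Csum (n : nat) (g : nat -> Cpx) : Cpx :=
  match n with O => C0 | S m => Cadd (Csum m g) (g m) end.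
Fixpoint Rsumn (n : nat) (g : nat -> R) : R :=
  match n with O => 0 | S m => Rsumn m g + g m end.

Definition in_C2pi (f : R -> Cpx) : Prop :=
  continuity (fun t => fst (f t)) /\ continuity (fun t => snd (f t)) /\
  (forall t, f (t + 2 * PI) = f t).

(* Riemann integral of a real function (0 if not integrable; continuous
   functions are integrable, and RiemannInt does not depend on the proof). *)
Definition Rint (g : R -> R) (a b : R) : R :=
  match excluded_middle_informative (exists p : Riemann_integrable g a b, True) with
  | left H => RiemannInt (proj1_sig (constructive_indefinite_description _ H))
  | right _ => 0
  end.

(* a_k = 1/(2 pi) int_{-pi}^{pi} f(t) e^{-ikt} dt *)
Definition fourier (f : R -> Cpx) (k : Z) : Cpx :=
  let kr := IZR k in
  (Rint (fun t => fst (f t) * cos (kr * t) + snd (f t) * sin (kr * t)) (- PI) PI / (2 * PI),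
   Rint (fun t => snd (f t) * cos (kr * t) - fst (f t) * sin (kr * t)) (- PI) PI / (2 * PI)).

(* ---------- n x n matrices: entries (j,k) with j,k < n (0-based) ---------- *)
Definition mat := nat -> nat -> Cpx.

Definition toeplitz (n : nat) (f : R -> Cpx) : mat :=
  fun j k => fourier f (Z.of_nat j - Z.of_nat k).

Definition circ_coef (n : nat) (f : R -> Cpx) (k : nat) : Cpx :=
  Cscale (1 / INR n)
    (Cadd (Cscale (INR (n - k)) (fourier f (Z.of_nat k)))
          (Cscale (INR k) (fourier f (Z.of_nat k - Z.of_nat n)))).

Definition opt_circ (n : nat) (f : R -> Cpx) : mat :=
  fun j k => circ_coef n f (Z.to_nat (Z.modulo (Z.of_nat j - Z.of_nat k) (Z.of_nat n))).

Definition mmul (n : nat) (X Y : mat) : mat :=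
  fun i j => Csum n (fun l => Cmul (X i l) (Y l j)).
Definition mid : mat := fun i j => if Nat.eqb i j then C1 else C0.
Fixpoint mpow (n : nat) (X : mat) (m : nat) : mat :=
  match m with O => mid | S p => mmul n (mpow n X p) X end.

(* limit of a real sequence (0 if it does not converge) *)
Definition Rlim (u : nat -> R) : R :=
  match excluded_middle_informative (exists l, Un_cv u l) with
  | left H => proj1_sig (constructive_indefinite_description _ H)
  | right _ => 0
  end.

Definition mcos_partial (n : nat) (X : mat) (K : nat) : mat :=
  fun i j => Csum (S K) (fun m =>
     Cscale ((-1) ^ m / INR (fact (2 * m))) (mpow n X (2 * m) i j)).

Definition mcos (n : nat) (X : mat) : mat :=
  fun i j => (Rlim (fun K => fst (mcos_partial n X K i j)),
              Rlim (fun K => snd (mcos_partial n X K i j))).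

(* rank X <= r : the column space of X is spanned by r vectors of Cpx^n *)
Definition rank_le (n : nat) (X : mat) (r : nat) : Prop :=
  exists U : mat, forall j, (j < n)%nat ->
    exists coef : nat -> Cpx, forall i, (i < n)%nat ->
      X i j = Csum r (fun l => Cmul (coef l) (U i l)).

(* spectral norm ||X||_2 <= eps : ||X x||_2 <= eps ||x||_2 for all x in Cpx^n *)
Definition vnorm (n : nat) (x : nat -> Cpx) : R := sqrt (Rsumn n (fun i => Cmod2 (x i))).
Definition mvec (n : nat) (X : mat) (x : nat -> Cpx) : nat -> Cpx :=
  fun i => Csum n (fun l => Cmul (X i l) (x l)).
Definition spec_norm_le (n : nat) (X : mat) (eps : R) : Prop :=
  forall x : nat -> Cpx, vnorm n (mvec n X x) <= eps * vnorm n x.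

(* The matrices A = A_n[f] and C = c_n[f] are bounded in spectral norm by sup|f|: A is the
   compression of multiplication by f to trigonometric polynomials of degree < n, and C is an
   average of cyclically shifted copies of A.  Approximating f uniformly by a Fejer mean p of
   degree < L splits C - A into the difference C - A for f - p, of norm <= 2 sup|f - p|, plus the
   difference for p, a band matrix whose entries outside 2L border columns are O(L/n).  So C = Z + R
   with rank R <= 2L and ||Z - A|| small.  Truncating cos after K terms (the tails are uniformly
   small because the norms are bounded), cos_K C - cos_K Z has rank <= (K + 1) 2K (2L) since
   each C^m - Z^m has rank <= m rank R, while cos_K Z - cos_K A is small because cos_K is
   Lipschitz on bounded sets. *)

From Coquelicot Require Import Coquelicot.
From Stdlib Require Import Reals Lra Lia ZArith ClassicalEpsilon FunctionalExtensionality.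
From Stdlib Require Import Setoid Morphisms.
From Pilot Require Import Defs.
Open Scope R_scope.

Lemma Rsumn_ext n g h : (forall i, (i < n)%nat -> g i = h i) -> Rsumn n g = Rsumn n h.
Proof. induction n; simpl; intros H; auto. rewrite IHn by (intros; apply H; lia). rewrite H by lia; auto. Qed.
Lemma Rsumn_plus n g h : Rsumn n (fun i => g i + h i) = Rsumn n g + Rsumn n h.
Proof. induction n; simpl; [ring|rewrite IHn; ring]. Qed.
Lemma Rsumn_scal n c g : Rsumn n (fun i => c * g i) = c * Rsumn n g.
Proof. induction n; simpl; [ring|rewrite IHn; ring]. Qed.
Lemma Rsumn_opp n g : Rsumn n (fun i => - g i) = - Rsumn n g.
Proof. induction n; simpl; [ring|rewrite IHn; ring]. Qed.
Lemma Rsumn_const n c : Rsumn n (fun _ => c) = INR n * c.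
Proof. induction n; simpl Rsumn; [simpl; ring|rewrite IHn, S_INR; ring]. Qed.
Lemma Rsumn_zero n : Rsumn n (fun _ => 0) = 0.
Proof. rewrite Rsumn_const; ring. Qed.
Lemma Rsumn_le n g h : (forall i, (i < n)%nat -> g i <= h i) -> Rsumn n g <= Rsumn n h.
Proof. induction n; simpl; intros H; [lra|]. assert (H1 := H n (Nat.lt_succ_diag_r n)).
  assert (Rsumn n g <= Rsumn n h) by (apply IHn; intros; apply H; lia). lra. Qed.
Lemma Rsumn_nonneg n g : (forall i, (i < n)%nat -> 0 <= g i) -> 0 <= Rsumn n g.
Proof. intros H. rewrite <- (Rsumn_zero n). apply Rsumn_le; auto. Qed.
Lemma Rsumn_add n m g : Rsumn (n + m) g = Rsumn n g + Rsumn m (fun i => g (n + i)%nat).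
Proof. induction m; simpl. rewrite Nat.add_0_r; ring. rewrite Nat.add_succ_r; simpl; rewrite IHm; ring. Qed.
Lemma Rsumn_swap n m g :
  Rsumn n (fun i => Rsumn m (fun j => g i j)) = Rsumn m (fun j => Rsumn n (fun i => g i j)).
Proof. induction n; simpl. rewrite Rsumn_const; ring. rewrite IHn, <- Rsumn_plus; auto. Qed.
Lemma Rsumn_term_le n g k : (forall i, (i < n)%nat -> 0 <= g i) -> (k < n)%nat -> g k <= Rsumn n g.
Proof. induction n; intros H Hk; [lia|]. simpl.
  destruct (Nat.eq_dec k n) as [->|].
  - assert (0 <= Rsumn n g) by (apply Rsumn_nonneg; intros; apply H; lia). lra.
  - assert (g k <= Rsumn n g) by (apply IHn; [intros; apply H; lia|lia]).
    assert (0 <= g n) by (apply H; lia). lra. Qed.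
Lemma Rsumn_single n k c : (k < n)%nat -> Rsumn n (fun i => if Nat.eqb i k then c else 0) = c.
Proof. induction n; intros Hk; [lia|]. simpl. destruct (Nat.eqb_spec n k).
  - subst. rewrite (Rsumn_ext _ _ (fun _ => 0)), Rsumn_zero; [ring|].
    intros i Hi; destruct (Nat.eqb_spec i k); [lia|auto].
  - rewrite IHn by lia; ring. Qed.

(* [Defs] models complex numbers as pairs, exactly as Coquelicot's [C]; the tactic [cring]
   transports a goal to [C] and calls [ring]. *)
Lemma Cscale_eq r z : Cscale r z = Cmult (RtoC r) z.
Proof. destruct z; unfold Cscale, Cmult, RtoC; simpl; f_equal; ring. Qed.
Lemma Cmod2_eq z : Cmod2 z = Cmod z ^ 2.
Proof. unfold Cmod2, Cmod. rewrite pow2_sqrt. simpl; ring. destruct z; simpl; nra. Qed.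
Lemma Cmod2_nonneg z : 0 <= Cmod2 z. Proof. unfold Cmod2; nra. Qed.

Lemma Cpx_ring_theory :
  ring_theory (RtoC 0 : Cpx) (RtoC 1) Cplus Cmult Cminus Complex.Copp (@eq Cpx).
Proof. exact C_ring_theory. Qed.
Add Ring Cpx_ring : Cpx_ring_theory.
Ltac tocx := unfold Csub in *; change Defs.Copp with Complex.Copp in *; repeat rewrite Cscale_eq in *;
  change Cadd with Cplus in *; change Cmul with Cmult in *;
  change Defs.C0 with (RtoC 0) in *; change Defs.C1 with (RtoC 1) in *.
Ltac cring := tocx; first [ring | match goal with |- @eq _ ?a ?b => change (@eq Complex.C a b) end; ring
  | match goal with |- @eq _ ?a ?b => change (@eq Cpx a b) end; ring].

Lemma Csum_pair n g : Csum n g = (Rsumn n (fun i => fst (g i)), Rsumn n (fun i => snd (g i))).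
Proof. induction n; simpl; auto. rewrite IHn; reflexivity. Qed.
Lemma Csum_ext n g h : (forall i, (i < n)%nat -> g i = h i) -> Csum n g = Csum n h.
Proof. induction n; simpl; intros H; auto. rewrite IHn by (intros; apply H; lia). rewrite H by lia; auto. Qed.
#[export] Instance Csum_proper n : Proper (pointwise_relation nat eq ==> eq) (Csum n).
Proof. intros f g H. apply Csum_ext; intros; apply H. Qed.
Lemma Csum_plus n g h : Csum n (fun i => Cplus (g i) (h i)) = Cplus (Csum n g) (Csum n h).
Proof. induction n; simpl. unfold C0, Cplus; simpl; f_equal; ring. rewrite IHn. cring. Qed.
Lemma Csum_minus n g h : Csum n (fun i => Cminus (g i) (h i)) = Cminus (Csum n g) (Csum n h).
Proof. induction n; simpl. unfold C0, Cminus, Cplus, Complex.Copp; simpl; f_equal; ring. rewrite IHn. cring. Qed.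
Lemma Csum_mull n c g : Csum n (fun i => Cmult c (g i)) = Cmult c (Csum n g).
Proof. induction n; simpl. unfold C0, Cmult; simpl; f_equal; ring. rewrite IHn. cring. Qed.
Lemma Csum_mulr n c g : Csum n (fun i => Cmult (g i) c) = Cmult (Csum n g) c.
Proof. induction n; simpl. unfold C0, Cmult; simpl; f_equal; ring. rewrite IHn. cring. Qed.
Lemma Csum_zero n : Csum n (fun _ => RtoC 0) = RtoC 0.
Proof. induction n; simpl; auto. rewrite IHn. cring. Qed.
Lemma Csum_const n c : Csum n (fun _ => c) = Cmult (RtoC (INR n)) c.
Proof. rewrite Csum_pair, !Rsumn_const. destruct c; unfold Cmult, RtoC; simpl; f_equal; ring. Qed.
Lemma Csum_const_ext n c g : (forall i, (i < n)%nat -> g i = c) -> Csum n g = Cmult (RtoC (INR n)) c.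
Proof. intros H. rewrite (Csum_ext n g (fun _ => c)) by auto. apply Csum_const. Qed.
Lemma Csum_add n m g : Csum (n + m) g = Cplus (Csum n g) (Csum m (fun i => g (n + i)%nat)).
Proof. rewrite !Csum_pair, !Rsumn_add. reflexivity. Qed.
Lemma Csum_swap n m g :
  Csum n (fun i => Csum m (fun j => g i j)) = Csum m (fun j => Csum n (fun i => g i j)).
Proof.
  rewrite !Csum_pair. f_equal.
  - rewrite (Rsumn_ext _ _ (fun i => Rsumn m (fun j => fst (g i j)))) by (intros; rewrite Csum_pair; auto).
    rewrite Rsumn_swap. apply Rsumn_ext; intros; rewrite Csum_pair; auto.
  - rewrite (Rsumn_ext _ _ (fun i => Rsumn m (fun j => snd (g i j)))) by (intros; rewrite Csum_pair; auto).
    rewrite Rsumn_swap. apply Rsumn_ext; intros; rewrite Csum_pair; auto.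
Qed.
Lemma Csum_single n k c : (k < n)%nat -> Csum n (fun i => if Nat.eqb i k then c else RtoC 0) = c.
Proof. intros Hk. rewrite Csum_pair. destruct c as [a b].
  rewrite (Rsumn_ext _ _ (fun i => if Nat.eqb i k then a else 0)) by (intros; destruct (Nat.eqb i k); auto).
  rewrite (Rsumn_ext n (fun i => snd _) (fun i => if Nat.eqb i k then b else 0))
    by (intros; destruct (Nat.eqb i k); auto).
  rewrite !Rsumn_single; auto. Qed.
Lemma Cmod_Csum n g : Cmod (Csum n g) <= Rsumn n (fun i => Cmod (g i)).
Proof. induction n; simpl. change C0 with (RtoC 0). rewrite Cmod_0; lra.
  change Cadd with Cplus. eapply Rle_trans; [apply Cmod_triangle|]. lra. Qed.
Lemma Csum_conj n g : Cconj (Csum n g) = Csum n (fun i => Cconj (g i)).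
Proof. rewrite !Csum_pair. unfold Cconj; simpl. f_equal. rewrite Rsumn_opp; auto. Qed.
Lemma Cmult_Csum n m a b :
  Cmult (Csum n a) (Csum m b) = Csum n (fun i => Csum m (fun j => Cmult (a i) (b j))).
Proof. rewrite <- Csum_mulr. apply Csum_ext; intros. rewrite Csum_mull. auto. Qed.
Lemma Cmod_Cscale r z : Cmod (Cscale r z) = Rabs r * Cmod z.
Proof. rewrite Cscale_eq, Cmod_mult, Cmod_R. auto. Qed.
Lemma Cmod_le_sum z : Cmod z <= Rabs (fst z) + Rabs (snd z).
Proof.
  assert (0 <= Rabs (fst z)) by apply Rabs_pos; assert (0 <= Rabs (snd z)) by apply Rabs_pos.
  unfold Cmod. rewrite <- (sqrt_pow2 (Rabs (fst z) + Rabs (snd z))) by lra.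
  apply sqrt_le_1_alt. rewrite <- (pow2_abs (fst z)), <- (pow2_abs (snd z)). simpl. nra. Qed.

Lemma nat_unbounded A : exists N : nat, A <= INR N.
Proof. destruct (archimed A) as [H1 H2]. destruct (Z_le_gt_dec 0 (up A)).
  - exists (Z.to_nat (up A)). rewrite INR_IZR_INZ, Z2Nat.id by auto. lra.
  - exists 0%nat. simpl. assert (IZR (up A) <= 0) by (apply IZR_le; lia). lra. Qed.

Definition sqnorm n (x : nat -> Cpx) := Rsumn n (fun i => Cmod2 (x i)).
Definition cdot n (y z : nat -> Cpx) := Csum n (fun i => Cmult (Cconj (y i)) (z i)).
Definition meq n (A B : mat) := forall i j, (i < n)%nat -> (j < n)%nat -> A i j = B i j.

(* [form_le n M d] says |<y, M x>| <= d |x| |y| in a square-root-free form; optimising over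
   [lam] recovers the product form.  Unlike [spec_norm_le] it is visibly stable under sums,
   which makes it the convenient intermediate notion. *)
Definition form_le n (M : mat) d := forall x y lam, 0 < lam ->
  Cmod (cdot n y (mvec n M x)) <= d / 2 * (lam * sqnorm n y + sqnorm n x / lam).

Definition madd (A B : mat) : mat := fun i j => Cplus (A i j) (B i j).
Definition msub (A B : mat) : mat := fun i j => Cminus (A i j) (B i j).
Definition mscal (c : Cpx) (A : mat) : mat := fun i j => Cmult c (A i j).
Definition msum K (A : nat -> mat) : mat := fun i j => Csum K (fun m => A m i j).
Definition mzero : mat := fun _ _ => RtoC 0.

Lemma sqnorm_nonneg n x : 0 <= sqnorm n x.
Proof. apply Rsumn_nonneg; intros; apply Cmod2_nonneg. Qed.
Lemma sqnorm_ext n x x' : (forall i, (i < n)%nat -> x i = x' i) -> sqnorm n x = sqnorm n x'.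
Proof. intros H; apply Rsumn_ext; intros; rewrite H; auto. Qed.
Lemma vnorm_ext n x x' : (forall i, (i < n)%nat -> x i = x' i) -> vnorm n x = vnorm n x'.
Proof. intros H. unfold vnorm. f_equal. apply (sqnorm_ext n x x' H). Qed.
Lemma cdot_ext n y z z' : (forall i, (i < n)%nat -> z i = z' i) -> cdot n y z = cdot n y z'.
Proof. intros H; apply Csum_ext; intros; rewrite H; auto. Qed.
Lemma cdot_self n z : cdot n z z = RtoC (sqnorm n z).
Proof. unfold cdot, sqnorm. rewrite Csum_pair. unfold RtoC. f_equal.
  - apply Rsumn_ext; intros; unfold Cmod2, Cconj, Cmult; simpl; ring.
  - rewrite <- (Rsumn_zero n). apply Rsumn_ext; intros; unfold Cconj, Cmult; simpl; ring. Qed.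
Lemma cdot_plus n y u v : cdot n y (fun i => Cplus (u i) (v i)) = Cplus (cdot n y u) (cdot n y v).
Proof. unfold cdot. rewrite <- Csum_plus. apply Csum_ext; intros; cring. Qed.
Lemma cdot_scal n y c u : cdot n y (fun i => Cmult c (u i)) = Cmult c (cdot n y u).
Proof. unfold cdot. rewrite <- Csum_mull. apply Csum_ext; intros; cring. Qed.

Lemma amgm a b lam : 0 < lam -> a * b <= (lam * a ^ 2 + b ^ 2 / lam) / 2.
Proof. intros H.
  assert (lam * a ^ 2 + b ^ 2 / lam - 2 * a * b = (lam * a - b) ^ 2 / lam) by (field; lra).
  assert (0 <= (lam * a - b) ^ 2 / lam)
    by (apply Rmult_le_pos; [apply pow2_ge_0|left; apply Rinv_0_lt_compat; lra]). lra. Qed.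

Lemma cdot_bound n y z lam : 0 < lam ->
  Cmod (cdot n y z) <= (lam * sqnorm n y + sqnorm n z / lam) / 2.
Proof. intros H. unfold cdot. eapply Rle_trans; [apply Cmod_Csum|].
  replace ((lam * sqnorm n y + sqnorm n z / lam) / 2)
    with (Rsumn n (fun i => (lam * Cmod2 (y i) + Cmod2 (z i) / lam) / 2)).
  - apply Rsumn_le; intros. rewrite Cmod_mult, Cmod_conj, !Cmod2_eq. apply amgm; auto.
  - unfold sqnorm. clear - H. induction n; simpl; [field|rewrite IHn; field]; lra. Qed.

Lemma sqnorm_mvec_le n M d x : 0 <= d -> spec_norm_le n M d ->
  sqnorm n (mvec n M x) <= d ^ 2 * sqnorm n x.
Proof. intros Hd H. specialize (H x). unfold vnorm in H. fold (sqnorm n x) (sqnorm n (mvec n M x)) in H.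
  assert (0 <= sqrt (sqnorm n x)) by apply sqrt_pos.
  assert (0 <= sqrt (sqnorm n (mvec n M x))) by apply sqrt_pos.
  assert (Hsq : sqrt (sqnorm n (mvec n M x)) ^ 2 <= (d * sqrt (sqnorm n x)) ^ 2)
    by (apply pow_incr; split; [apply sqrt_pos|auto]).
  rewrite Rpow_mult_distr, !pow2_sqrt in Hsq by apply sqnorm_nonneg. exact Hsq. Qed.

Lemma spec_of_form_le n M d : 0 <= d -> form_le n M d -> spec_norm_le n M d.
Proof.
  intros Hd H x. set (z := mvec n M x).
  assert (Hz : sqnorm n z <= d ^ 2 * sqnorm n x).
  { assert (Ha : forall lam, 0 < lam -> sqnorm n z <= d / 2 * (lam * sqnorm n z + sqnorm n x / lam)).
    { intros lam Hl. specialize (H x z lam Hl). fold z in H.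
      rewrite cdot_self, Cmod_R, Rabs_pos_eq in H by apply sqnorm_nonneg. auto. }
    destruct (Req_dec d 0) as [->|]; [specialize (Ha 1 Rlt_0_1); lra|].
    specialize (Ha (/ d) ltac:(apply Rinv_0_lt_compat; lra)).
    replace (d / 2 * (/ d * sqnorm n z + sqnorm n x / / d)) with (sqnorm n z / 2 + d ^ 2 * sqnorm n x / 2)
      in Ha by (field; auto). lra. }
  unfold vnorm. fold (sqnorm n z) (sqnorm n x).
  rewrite <- (sqrt_pow2 d Hd), <- sqrt_mult_alt by (apply pow2_ge_0). apply sqrt_le_1_alt. lra.
Qed.

Lemma le0_of_le_mul_small a c : (forall mu, 0 < mu -> a <= mu * c) -> 0 <= c -> a <= 0.
Proof. intros H Hc. destruct (Rle_dec a 0); auto. exfalso.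
  specialize (H (a / (2 * (c + 1))) ltac:(apply Rdiv_lt_0_compat; lra)).
  assert (a / (2 * (c + 1)) * c < a).
  { apply (Rmult_lt_reg_r (2*(c+1))). lra. field_simplify; [|lra]. nra. } lra. Qed.

Lemma form_le_of_spec n M d : 0 <= d -> spec_norm_le n M d -> form_le n M d.
Proof.
  intros Hd H x y lam Hl. assert (Hz := sqnorm_mvec_le n M d x Hd H). set (z := mvec n M x) in *.
  destruct (Req_dec d 0) as [->|].
  - replace (0 / 2 * (lam * sqnorm n y + sqnorm n x / lam)) with 0 by (field; lra).
    assert (0 <= sqnorm n y) by apply sqnorm_nonneg.
    apply le0_of_le_mul_small with (c := sqnorm n y / 2); [|lra].
    intros mu Hmu. eapply Rle_trans; [apply (cdot_bound _ _ _ mu Hmu)|].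
    assert (0 <= sqnorm n z) by apply sqnorm_nonneg. replace (sqnorm n z) with 0 by (simpl in Hz; lra).
    unfold Rdiv; lra.
  - eapply Rle_trans; [apply (cdot_bound _ _ _ (d * lam)); nra|].
    assert (sqnorm n z / (d * lam) <= d ^ 2 * sqnorm n x / (d * lam)).
    { unfold Rdiv. apply Rmult_le_compat_r; auto. left; apply Rinv_0_lt_compat; nra. }
    replace (d / 2 * (lam * sqnorm n y + sqnorm n x / lam))
      with ((d * lam * sqnorm n y + d ^ 2 * sqnorm n x / (d * lam)) / 2) by (field; lra). lra.
Qed.

Lemma spec_mono n M d d' : d <= d' -> spec_norm_le n M d -> spec_norm_le n M d'.
Proof. intros H1 H x. eapply Rle_trans; [apply H|]. apply Rmult_le_compat_r; auto. apply sqrt_pos. Qed.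

Lemma mvec_meq n A B x i : meq n A B -> (i < n)%nat -> mvec n A x i = mvec n B x i.
Proof. intros H Hi. apply Csum_ext; intros; rewrite H; auto. Qed.
Lemma form_le_meq n A B d : meq n A B -> form_le n A d -> form_le n B d.
Proof. intros H Hq x y lam Hl. rewrite (cdot_ext _ _ _ (mvec n A x)). apply Hq; auto.
  intros; symmetry; apply mvec_meq; auto. Qed.
Lemma spec_meq n A B d : meq n A B -> spec_norm_le n A d -> spec_norm_le n B d.
Proof. intros H Hs x. rewrite (vnorm_ext _ _ (mvec n A x)). apply Hs.
  intros; symmetry; apply mvec_meq; auto. Qed.

Lemma form_le_add n A B a b : form_le n A a -> form_le n B b -> form_le n (madd A B) (a + b).
Proof. intros HA HB x y lam Hl.
  rewrite (cdot_ext _ _ _ (fun i => Cplus (mvec n A x i) (mvec n B x i))).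
  - rewrite cdot_plus. eapply Rle_trans; [apply Cmod_triangle|].
    specialize (HA x y lam Hl). specialize (HB x y lam Hl). lra.
  - intros. unfold mvec, madd. rewrite <- Csum_plus. apply Csum_ext; intros; cring. Qed.
Lemma form_le_scal n A c a : form_le n A a -> form_le n (mscal c A) (Cmod c * a).
Proof. intros HA x y lam Hl.
  rewrite (cdot_ext _ _ _ (fun i => Cmult c (mvec n A x i))).
  - rewrite cdot_scal, Cmod_mult. specialize (HA x y lam Hl). assert (0 <= Cmod c) by apply Cmod_ge_0.
    replace (Cmod c * a / 2 * (lam * sqnorm n y + sqnorm n x / lam))
      with (Cmod c * (a / 2 * (lam * sqnorm n y + sqnorm n x / lam))) by (unfold Rdiv; ring).
    apply Rmult_le_compat_l; auto.
  - intros. unfold mvec, mscal. rewrite <- Csum_mull. apply Csum_ext; intros; cring. Qed.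
Lemma form_le_zero n : form_le n mzero 0.
Proof. intros x y lam Hl. unfold cdot, mvec, mzero.
  rewrite (Csum_ext _ _ (fun _ => RtoC 0)), Csum_zero, Cmod_0; [lra|].
  intros. rewrite (Csum_ext _ _ (fun _ => RtoC 0)), Csum_zero; [cring|]. intros; cring. Qed.
Lemma form_le_msum n K A d :
  (forall m, (m < K)%nat -> form_le n (A m) (d m)) -> form_le n (msum K A) (Rsumn K d).
Proof. induction K; intros H.
  - simpl. eapply form_le_meq; [|apply form_le_zero]. intros i j _ _. reflexivity.
  - simpl. apply (form_le_meq n (madd (msum K A) (A K))); [intros i j _ _; reflexivity|].
    apply form_le_add; [apply IHK; intros|]; apply H; lia. Qed.

Lemma spec_add n A B a b : 0 <= a -> 0 <= b ->
  spec_norm_le n A a -> spec_norm_le n B b -> spec_norm_le n (madd A B) (a + b).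
Proof. intros. apply spec_of_form_le; [lra|]. apply form_le_add; apply form_le_of_spec; auto. Qed.
Lemma spec_scal n A c a : 0 <= a -> spec_norm_le n A a -> spec_norm_le n (mscal c A) (Cmod c * a).
Proof. intros. apply spec_of_form_le.
  - apply Rmult_le_pos; auto; apply Cmod_ge_0.
  - apply form_le_scal; apply form_le_of_spec; auto. Qed.
Lemma spec_msub n A B a b : 0 <= a -> 0 <= b ->
  spec_norm_le n A a -> spec_norm_le n B b -> spec_norm_le n (msub A B) (a + b).
Proof. intros. apply (spec_meq n (madd A (mscal (RtoC (-1)) B))).
  { intros i j _ _. unfold msub, madd, mscal. cring. }
  apply spec_add; auto. replace b with (Cmod (RtoC (-1)) * b).
  - apply spec_scal; auto.
  - rewrite Cmod_R, Rabs_left by lra. ring. Qed.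
Lemma spec_msum n K A d : (forall m, (m < K)%nat -> 0 <= d m /\ spec_norm_le n (A m) (d m)) ->
  spec_norm_le n (msum K A) (Rsumn K d).
Proof. intros H. apply spec_of_form_le.
  - apply Rsumn_nonneg; intros; apply H; auto.
  - apply form_le_msum; intros; apply form_le_of_spec; apply H; auto. Qed.

Lemma mvec_mmul n A B x i : mvec n (mmul n A B) x i = mvec n A (mvec n B x) i.
Proof. unfold mvec, mmul. change Cmul with Cmult.
  rewrite (Csum_ext _ _ (fun l => Csum n (fun k => Cmult (A i k) (Cmult (B k l) (x l))))).
  - rewrite Csum_swap. apply Csum_ext; intros. rewrite Csum_mull. auto.
  - intros. rewrite <- Csum_mulr. apply Csum_ext; intros; cring. Qed.
Lemma spec_mul n A B a b : 0 <= a ->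
  spec_norm_le n A a -> spec_norm_le n B b -> spec_norm_le n (mmul n A B) (a * b).
Proof. intros Ha HA HB x. rewrite (vnorm_ext _ _ (mvec n A (mvec n B x))) by (intros; apply mvec_mmul).
  eapply Rle_trans; [apply HA|]. rewrite Rmult_assoc. apply Rmult_le_compat_l; auto. Qed.
Lemma mvec_mid n x i : (i < n)%nat -> mvec n mid x i = x i.
Proof. intros Hi. unfold mvec, mid. rewrite (Csum_ext _ _ (fun l => if Nat.eqb l i then x i else RtoC 0)).
  - apply Csum_single; auto.
  - intros l Hl. rewrite Nat.eqb_sym. destruct (Nat.eqb_spec l i); subst; cring. Qed.
Lemma spec_mid n : spec_norm_le n mid 1.
Proof. intros x. rewrite (vnorm_ext _ _ x) by (intros; apply mvec_mid; auto). lra. Qed.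
Lemma spec_pow n M B m : 0 <= B -> spec_norm_le n M B -> spec_norm_le n (mpow n M m) (B ^ m).
Proof. intros HB H. induction m; simpl; [apply spec_mid|].
  rewrite Rmult_comm. apply spec_mul; auto. apply pow_le; auto. Qed.

Lemma spec_entry n M B i j : (i < n)%nat -> (j < n)%nat -> spec_norm_le n M B -> Cmod (M i j) <= B.
Proof.
  intros Hi Hj H. set (e := fun l => if Nat.eqb l j then RtoC 1 else RtoC 0).
  specialize (H e). assert (Hn : sqnorm n e = 1).
  { unfold sqnorm. rewrite (Rsumn_ext _ _ (fun l => if Nat.eqb l j then 1 else 0)).
    - apply Rsumn_single; auto.
    - intros; unfold e; destruct (Nat.eqb i0 j); unfold Cmod2; simpl; ring. }
  assert (Hcol : mvec n M e i = M i j).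
  { unfold mvec, e. rewrite (Csum_ext _ _ (fun l => if Nat.eqb l j then M i j else RtoC 0)).
    - apply Csum_single; auto.
    - intros l Hl. destruct (Nat.eqb_spec l j); subst; cring. }
  unfold vnorm in H. fold (sqnorm n e) in H. rewrite Hn, sqrt_1, Rmult_1_r in H.
  eapply Rle_trans; [|apply H]. unfold Cmod. rewrite <- Hcol. apply sqrt_le_1_alt.
  replace (fst (mvec n M e i) ^ 2 + snd (mvec n M e i) ^ 2) with (Cmod2 (mvec n M e i)) by (unfold Cmod2; ring).
  apply (Rsumn_term_le n (fun i => Cmod2 (mvec n M e i)) i); auto. intros; apply Cmod2_nonneg.
Qed.

Lemma form_le_schur n M s : (forall i, (i < n)%nat -> Rsumn n (fun j => Cmod (M i j)) <= s) ->
  (forall j, (j < n)%nat -> Rsumn n (fun i => Cmod (M i j)) <= s) -> form_le n M s.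
Proof.
  intros Hr Hc x y lam Hl.
  assert (Hpt : Cmod (cdot n y (mvec n M x)) <=
    Rsumn n (fun i => Rsumn n (fun j => Cmod (M i j) * ((lam * Cmod2 (y i) + Cmod2 (x j) / lam) / 2)))).
  { unfold cdot, mvec. eapply Rle_trans; [apply Cmod_Csum|]. apply Rsumn_le. intros i Hi.
    rewrite Cmod_mult, Cmod_conj. eapply Rle_trans.
    { apply Rmult_le_compat_l; [apply Cmod_ge_0|apply Cmod_Csum]. }
    rewrite <- Rsumn_scal. apply Rsumn_le. intros j Hj. change Cmul with Cmult. rewrite Cmod_mult, !Cmod2_eq.
    replace (Cmod (y i) * (Cmod (M i j) * Cmod (x j))) with (Cmod (M i j) * (Cmod (y i) * Cmod (x j))) by ring.
    apply Rmult_le_compat_l; [apply Cmod_ge_0|apply amgm; auto]. }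
  assert (Hrows : Rsumn n (fun i => Cmod2 (y i) * Rsumn n (fun j => Cmod (M i j))) <= s * sqnorm n y).
  { unfold sqnorm. rewrite <- Rsumn_scal. apply Rsumn_le; intros. rewrite Rmult_comm.
    apply Rmult_le_compat_r; [apply Cmod2_nonneg|auto]. }
  assert (Hcols : Rsumn n (fun j => Cmod2 (x j) * Rsumn n (fun i => Cmod (M i j))) <= s * sqnorm n x).
  { unfold sqnorm. rewrite <- Rsumn_scal. apply Rsumn_le; intros. rewrite Rmult_comm.
    apply Rmult_le_compat_r; [apply Cmod2_nonneg|auto]. }
  eapply Rle_trans; [exact Hpt|].
  rewrite (Rsumn_ext _ _ (fun i => lam / 2 * (Cmod2 (y i) * Rsumn n (fun j => Cmod (M i j))) +
     / (2 * lam) * Rsumn n (fun j => Cmod2 (x j) * Cmod (M i j)))).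
  - rewrite Rsumn_plus, !Rsumn_scal, Rsumn_swap.
    rewrite (Rsumn_ext n (fun j => Rsumn n (fun i => Cmod2 (x j) * Cmod (M i j)))
               (fun j => Cmod2 (x j) * Rsumn n (fun i => Cmod (M i j)))) by (intros; apply Rsumn_scal).
    assert (0 < lam / 2) by lra. assert (0 < / (2 * lam)) by (apply Rinv_0_lt_compat; lra).
    replace (s / 2 * (lam * sqnorm n y + sqnorm n x / lam))
      with (lam / 2 * (s * sqnorm n y) + / (2 * lam) * (s * sqnorm n x)) by (field; lra).
    apply Rplus_le_compat; apply Rmult_le_compat_l; lra.
  - intros i Hi. rewrite <- !Rsumn_scal, <- Rsumn_plus. apply Rsumn_ext; intros j Hj. field. lra.
Qed.

(** * Rank *)

Lemma rank_meq n X Y r : meq n X Y -> rank_le n X r -> rank_le n Y r.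
Proof. intros H [U HU]. exists U. intros j Hj. destruct (HU j Hj) as [c Hc]. exists c.
  intros i Hi. rewrite <- H by auto. apply Hc; auto. Qed.

Lemma rank_mono n X r r' : (r <= r')%nat -> rank_le n X r -> rank_le n X r'.
Proof.
  intros Hr [U HU]. exists U. intros j Hj. destruct (HU j Hj) as [c Hc].
  exists (fun l => if Nat.ltb l r then c l else RtoC 0). intros i Hi. rewrite Hc by auto.
  replace r' with (r + (r' - r))%nat by lia. rewrite Csum_add.
  rewrite (Csum_ext (r' - r) _ (fun _ => RtoC 0)), Csum_zero.
  - transitivity (Cplus (Csum r (fun l => Cmul (c l) (U i l))) (RtoC 0)); [cring|]. f_equal.
    apply Csum_ext. intros l Hl. destruct (Nat.ltb_spec l r); [auto|lia].
  - intros l Hl. destruct (Nat.ltb_spec (r + l) r); [lia|]. cring.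
Qed.

Lemma rank_add n A B r1 r2 : rank_le n A r1 -> rank_le n B r2 -> rank_le n (madd A B) (r1 + r2).
Proof.
  intros [U1 H1] [U2 H2]. exists (fun i l => if Nat.ltb l r1 then U1 i l else U2 i (l - r1)%nat).
  intros j Hj. destruct (H1 j Hj) as [c1 Hc1], (H2 j Hj) as [c2 Hc2].
  exists (fun l => if Nat.ltb l r1 then c1 l else c2 (l - r1)%nat). intros i Hi.
  unfold madd. rewrite Hc1, Hc2, Csum_add by auto. f_equal.
  - apply Csum_ext; intros l Hl. destruct (Nat.ltb_spec l r1); [auto|lia].
  - apply Csum_ext; intros l Hl. destruct (Nat.ltb_spec (r1 + l) r1); [lia|].
    replace (r1 + l - r1)%nat with l by lia. auto.
Qed.

Lemma rank_scal n A c r : rank_le n A r -> rank_le n (mscal c A) r.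
Proof. intros [U HU]. exists U. intros j Hj. destruct (HU j Hj) as [cf Hc].
  exists (fun l => Cmult c (cf l)). intros i Hi. unfold mscal. rewrite Hc by auto.
  change Cmul with Cmult. rewrite <- Csum_mull. apply Csum_ext; intros; cring. Qed.

Lemma rank_mul_l n A B r : rank_le n B r -> rank_le n (mmul n A B) r.
Proof.
  intros [U HU]. exists (mmul n A U). intros j Hj. destruct (HU j Hj) as [cf Hc].
  exists cf. intros i Hi. unfold mmul. change Cmul with Cmult.
  rewrite (Csum_ext n _ (fun k => Csum r (fun l => Cmult (cf l) (Cmult (A i k) (U k l))))).
  - rewrite Csum_swap. apply Csum_ext; intros. rewrite Csum_mull; auto.
  - intros k Hk. rewrite Hc, <- Csum_mull by auto. apply Csum_ext; intros; cring.
Qed.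

Lemma rank_mul_r n A B r : rank_le n A r -> rank_le n (mmul n A B) r.
Proof.
  intros [U HU].
  assert (Hc : forall k, exists c : nat -> Cpx, (k < n)%nat ->
    forall i, (i < n)%nat -> A i k = Csum r (fun l => Cmul (c l) (U i l))).
  { intros k. destruct (lt_dec k n) as [Hk|Hk].
    - destruct (HU k Hk) as [c Hc]. exists c; auto.
    - exists (fun _ => RtoC 0); intros; lia. }
  apply choice in Hc. destruct Hc as [cf Hcf]. exists U. intros j Hj.
  exists (fun l => Csum n (fun k => Cmult (cf k l) (B k j))). intros i Hi. unfold mmul. change Cmul with Cmult.
  rewrite (Csum_ext n _ (fun k => Csum r (fun l => Cmult (Cmult (cf k l) (B k j)) (U i l)))).
  - rewrite Csum_swap. apply Csum_ext; intros. rewrite Csum_mulr; auto.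
  - intros k Hk. rewrite (Hcf k Hk i Hi), <- Csum_mulr. apply Csum_ext; intros; cring.
Qed.

Lemma rank_zero n X : meq n X mzero -> rank_le n X 0.
Proof. intros H. exists mzero. intros j Hj. exists (fun _ => RtoC 0). intros i Hi. rewrite H by auto. reflexivity. Qed.

Lemma rank_msum n K A r : (forall m, (m < K)%nat -> rank_le n (A m) r) -> rank_le n (msum K A) (K * r).
Proof.
  induction K; intros H; [apply rank_zero; intros i j _ _; reflexivity|].
  apply (rank_meq n (madd (msum K A) (A K))); [intros i j _ _; reflexivity|].
  replace (S K * r)%nat with (K * r + r)%nat by lia.
  apply rank_add; [apply IHK; intros|]; apply H; lia.
Qed.

Lemma rank_le_of_cols n X r s :
  (forall j, (j < n)%nat -> (exists l, (l < r)%nat /\ s l = j) \/ (forall i, (i < n)%nat -> X i j = RtoC 0)) ->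
  rank_le n X r.
Proof.
  intros H. exists (fun i l => X i (s l)). intros j Hj. destruct (H j Hj) as [[l [Hl Hs]]|Hz].
  - exists (fun m => if Nat.eqb m l then RtoC 1 else RtoC 0). intros i Hi.
    rewrite (Csum_ext r _ (fun m => if Nat.eqb m l then X i j else RtoC 0)), Csum_single; auto.
    intros m Hm. destruct (Nat.eqb_spec m l); subst; cring.
  - exists (fun _ => RtoC 0). intros i Hi. rewrite Hz by auto.
    rewrite (Csum_ext r _ (fun _ => RtoC 0)), Csum_zero; auto. intros; cring.
Qed.

Definition mpow_diff n X Z p : mat := msub (mpow n X p) (mpow n Z p).

Lemma mpow_diff_S n X Z p :
  mpow_diff n X Z (S p) = madd (mmul n (mpow n X p) (msub X Z)) (mmul n (mpow_diff n X Z p) Z).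
Proof. apply functional_extensionality; intro i; apply functional_extensionality; intro j.
  unfold mpow_diff, msub, madd, mmul. simpl. unfold mmul. change Cmul with Cmult.
  rewrite <- Csum_plus, <- Csum_minus. apply Csum_ext; intros; cring. Qed.

Lemma rank_mpow_diff n X Z r p : rank_le n (msub X Z) r -> rank_le n (mpow_diff n X Z p) (p * r).
Proof.
  intros Hr. induction p.
  - apply rank_zero. intros i j _ _. unfold mpow_diff, msub, mzero. simpl. cring.
  - rewrite mpow_diff_S. replace (S p * r)%nat with (r + p * r)%nat by lia.
    apply rank_add; [apply rank_mul_l|apply rank_mul_r]; auto.
Qed.

Lemma spec_mpow_diff n X Z B e p : 0 <= B -> 0 <= e ->
  spec_norm_le n X B -> spec_norm_le n Z B -> spec_norm_le n (msub X Z) e ->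
  spec_norm_le n (mpow_diff n X Z p) (INR p * B ^ (Nat.pred p) * e).
Proof.
  intros HB He HX HZ HE. induction p.
  - apply spec_mono with 0; [simpl; lra|]. apply spec_of_form_le; [lra|].
    eapply form_le_meq; [|apply form_le_zero].
    intros i j _ _. unfold mpow_diff, msub, mzero; simpl. cring.
  - rewrite mpow_diff_S. assert (0 <= INR p) by apply pos_INR. assert (0 <= B ^ p) by (apply pow_le; lra).
    assert (0 <= B ^ (Nat.pred p)) by (apply pow_le; lra).
    replace (INR (S p) * B ^ (Nat.pred (S p)) * e) with (B ^ p * e + INR p * B ^ (Nat.pred p) * e * B).
    + assert (0 <= INR p * B ^ Nat.pred p * e) by (apply Rmult_le_pos; [apply Rmult_le_pos|]; auto).
      apply spec_add; [nra|nra| |].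
      * apply spec_mul; auto. apply spec_pow; auto.
      * apply spec_mul; auto.
    + rewrite S_INR. simpl Nat.pred. destruct p; simpl; [ring|]. ring.
Qed.

(** * The matrix cosine *)

Definition Cseq_cv (u : nat -> Cpx) (l : Cpx) :=
  Un_cv (fun k => fst (u k)) (fst l) /\ Un_cv (fun k => snd (u k)) (snd l).

Lemma Un_cv_const c : Un_cv (fun _ => c) c.
Proof. intros e He. exists 0%nat. intros. unfold Rdist. rewrite Rminus_diag, Rabs_R0. lra. Qed.
Lemma Un_cv_ext u v l : (forall k, u k = v k) -> Un_cv u l -> Un_cv v l.
Proof. intros H Hu e He. destruct (Hu e He) as [N HN]. exists N. intros. rewrite <- H. auto. Qed.
Lemma Un_cv_shift u l K : Un_cv u l -> Un_cv (fun L => u (K + L)%nat) l.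
Proof. intros H e He. destruct (H e He) as [N HN]. exists N. intros. apply HN. lia. Qed.
Lemma Un_cv_le u l c : Un_cv u l -> (forall k, u k <= c) -> l <= c.
Proof. intros H Hu. apply (Rle_cv_lim Hu H). apply Un_cv_const. Qed.

Lemma Cseq_cv_const c : Cseq_cv (fun _ => c) c. Proof. split; apply Un_cv_const. Qed.
Lemma Cseq_cv_plus u v a b : Cseq_cv u a -> Cseq_cv v b -> Cseq_cv (fun k => Cplus (u k) (v k)) (Cplus a b).
Proof. intros [H1 H2] [H3 H4]. split; simpl; apply CV_plus; auto. Qed.
Lemma Cseq_cv_minus u v a b : Cseq_cv u a -> Cseq_cv v b -> Cseq_cv (fun k => Cminus (u k) (v k)) (Cminus a b).
Proof. intros [H1 H2] [H3 H4]. split; simpl; apply CV_minus; auto. Qed.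
Lemma Cseq_cv_mult u v a b : Cseq_cv u a -> Cseq_cv v b -> Cseq_cv (fun k => Cmult (u k) (v k)) (Cmult a b).
Proof. intros [H1 H2] [H3 H4]. split; simpl.
  - apply CV_minus; apply CV_mult; auto.
  - apply CV_plus; apply CV_mult; auto. Qed.
Lemma Cseq_cv_Csum n u a : (forall i, (i < n)%nat -> Cseq_cv (fun k => u k i) (a i)) ->
  Cseq_cv (fun k => Csum n (u k)) (Csum n a).
Proof. induction n; intros H; simpl; [apply Cseq_cv_const|]. change Cadd with Cplus.
  apply Cseq_cv_plus; [apply IHn; intros|]; apply H; lia. Qed.
Lemma Cseq_cv_Cmod u a : Cseq_cv u a -> Un_cv (fun k => Cmod (u k)) (Cmod a).
Proof. intros [H1 H2]. unfold Cmod. apply (continuity_seq sqrt (fun k => fst (u k) ^ 2 + snd (u k) ^ 2)).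
  - apply continuity_pt_sqrt. nra.
  - simpl. rewrite !Rmult_1_r. apply CV_plus; apply CV_mult; auto.
    + eapply Un_cv_ext; [|exact H1]; intros; simpl; ring.
    + eapply Un_cv_ext; [|exact H2]; intros; simpl; ring. Qed.
Lemma Cseq_cv_shift u a K : Cseq_cv u a -> Cseq_cv (fun L => u (K + L)%nat) a.
Proof. intros [H1 H2]. split; apply (Un_cv_shift (fun k => _ (u k))); auto. Qed.
Lemma Cseq_cv_cdot n y x (M : nat -> mat) T :
  (forall i l, (i < n)%nat -> (l < n)%nat -> Cseq_cv (fun L => M L i l) (T i l)) ->
  Cseq_cv (fun L => cdot n y (mvec n (M L) x)) (cdot n y (mvec n T x)).
Proof. intros H. unfold cdot, mvec. apply Cseq_cv_Csum. intros i Hi.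
  apply Cseq_cv_mult; [apply Cseq_cv_const|]. apply Cseq_cv_Csum. intros l Hl.
  apply Cseq_cv_mult; [apply H; auto|apply Cseq_cv_const]. Qed.

Lemma Rlim_eq u l : Un_cv u l -> Rlim u = l.
Proof. intros H. unfold Rlim. destruct excluded_middle_informative as [e|e].
  - destruct (constructive_indefinite_description _ e) as [l' Hl']. simpl. eapply UL_sequence; eauto.
  - exfalso; apply e; eauto. Qed.

Lemma cauchy_tail u : (forall e, 0 < e -> exists N, forall K r, (N <= K)%nat -> Rabs (u (K + r)%nat - u K) <= e) ->
  Cauchy_crit u.
Proof. intros H e He. destruct (H (e / 3) ltac:(lra)) as [N HN]. exists N. intros a b Ha Hb.
  unfold Rdist. assert (H1 := HN N (a - N)%nat (le_n N)). assert (H2 := HN N (b - N)%nat (le_n N)).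
  replace (N + (a - N))%nat with a in H1 by lia. replace (N + (b - N))%nat with b in H2 by lia.
  replace (u a - u b) with ((u a - u N) - (u b - u N)) by ring.
  eapply Rle_lt_trans; [apply Rabs_triang|]. rewrite Rabs_Ropp. lra. Qed.

Definition cos_coef (m : nat) := (-1) ^ m / INR (fact (2 * m)).
Definition cos_term n W m : mat := mscal (RtoC (cos_coef m)) (mpow n W (2 * m)).
Definition cos_maj B m := B ^ (2 * m) / INR (fact (2 * m)).

Lemma mcos_partial_eq n W K : mcos_partial n W K = msum (S K) (cos_term n W).
Proof. apply functional_extensionality; intro i; apply functional_extensionality; intro j.
  unfold mcos_partial, msum, cos_term, mscal. apply Csum_ext; intros. rewrite Cscale_eq. reflexivity. Qed.

Lemma fact_INR_pos m : 0 < INR (fact m).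
Proof. apply lt_0_INR, lt_O_fact. Qed.
Lemma cos_maj_nonneg B m : 0 <= B -> 0 <= cos_maj B m.
Proof. intros. unfold cos_maj. apply Rmult_le_pos; [apply pow_le; auto|left; apply Rinv_0_lt_compat, fact_INR_pos]. Qed.
Lemma Cmod_cos_coef m : Cmod (RtoC (cos_coef m)) = / INR (fact (2 * m)).
Proof. rewrite Cmod_R. unfold cos_coef, Rdiv. rewrite Rabs_mult, pow_1_abs, Rabs_pos_eq; [ring|].
  left; apply Rinv_0_lt_compat, fact_INR_pos. Qed.
Lemma spec_cos_term n W B m : 0 <= B -> spec_norm_le n W B -> spec_norm_le n (cos_term n W m) (cos_maj B m).
Proof. intros HB H. unfold cos_term. replace (cos_maj B m) with (Cmod (RtoC (cos_coef m)) * B ^ (2 * m)).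
  - apply spec_scal; [apply pow_le; auto|apply spec_pow; auto].
  - rewrite Cmod_cos_coef. unfold cos_maj; field. apply not_0_INR, fact_neq_0. Qed.

Lemma cos_maj_ratio B m : B ^ 2 <= INR m -> 0 <= B -> cos_maj B (S m) <= cos_maj B m / 2.
Proof.
  intros Hm HB. assert (0 <= INR m) by apply pos_INR.
  assert (Hq : cos_maj B (S m) = cos_maj B m * (B ^ 2 / ((2 * INR m + 2) * (2 * INR m + 1)))).
  { unfold cos_maj. replace (2 * S m)%nat with (S (S (2 * m))) by lia.
    replace (fact (S (S (2 * m)))) with ((S (S (2 * m))) * ((S (2 * m)) * fact (2 * m)))%nat by (simpl; lia).
    rewrite !mult_INR, !S_INR, mult_INR. simpl (INR 2).
    replace (B ^ S (S (2 * m))) with (B ^ 2 * B ^ (2 * m)) by (simpl; ring).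
    assert (0 < INR (fact (2 * m))) by apply fact_INR_pos.
    field. repeat split; lra. }
  assert (B ^ 2 / ((2 * INR m + 2) * (2 * INR m + 1)) <= / 2).
  { apply Rmult_le_reg_r with ((2 * INR m + 2) * (2 * INR m + 1)); [nra|].
    unfold Rdiv. rewrite Rmult_assoc, Rinv_l by nra. nra. }
  assert (0 <= cos_maj B m) by (apply cos_maj_nonneg; auto).
  rewrite Hq. unfold Rdiv. apply Rmult_le_compat_l; auto.
Qed.

(* Beyond [B ^ 2] the majorants decay geometrically with ratio 1/2. *)
Lemma cos_maj_tail B K r : 0 <= B -> B ^ 2 <= INR K ->
  Rsumn r (fun q => cos_maj B (S K + q)) <= 2 * cos_maj B (S K).
Proof.
  intros HB. revert K. induction r; intros K HK.
  - simpl. assert (0 <= cos_maj B (S K)) by (apply cos_maj_nonneg; auto). lra.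
  - replace (S r) with (1 + r)%nat by lia. rewrite Rsumn_add. simpl Rsumn at 1.
    rewrite (Rsumn_ext _ _ (fun q => cos_maj B (S (S K) + q))) by (intros; f_equal; lia).
    specialize (IHr (S K) ltac:(rewrite S_INR; lra)).
    assert (cos_maj B (S (S K)) <= cos_maj B (S K) / 2) by (apply cos_maj_ratio; auto; rewrite S_INR; lra).
    replace (S (K + 0))%nat with (S K) by lia. lra.
Qed.

Lemma cos_maj_lim B e : 0 < e -> exists N, forall m, (N <= m)%nat -> cos_maj B m < e.
Proof. intros He. destruct (cv_speed_pow_fact B e He) as [N HN]. exists N. intros m Hm.
  specialize (HN (2 * m)%nat ltac:(lia)). unfold Rdist in HN. rewrite Rminus_0_r in HN. unfold cos_maj.
  eapply Rle_lt_trans; [apply Rle_abs|]. auto. Qed.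

Lemma mcos_partial_diff n W K r :
  msub (mcos_partial n W (K + r)) (mcos_partial n W K) = msum r (fun q => cos_term n W (S K + q)).
Proof. rewrite !mcos_partial_eq. apply functional_extensionality; intro i; apply functional_extensionality; intro j.
  unfold msub, msum. replace (S (K + r)) with (S K + r)%nat by lia. rewrite Csum_add. cring. Qed.

Lemma spec_mcos_partial_diff n W B K r : 0 <= B -> B ^ 2 <= INR K -> spec_norm_le n W B ->
  spec_norm_le n (msub (mcos_partial n W (K + r)) (mcos_partial n W K)) (2 * cos_maj B (S K)).
Proof. intros HB HK H. eapply spec_mono; [apply cos_maj_tail; auto|].
  rewrite mcos_partial_diff. apply spec_msum. intros; split; [apply cos_maj_nonneg|apply spec_cos_term]; auto. Qed.

Lemma mcos_partial_cv n W B i j : 0 <= B -> spec_norm_le n W B -> (i < n)%nat -> (j < n)%nat ->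
  Cseq_cv (fun K => mcos_partial n W K i j) (mcos n W i j).
Proof.
  intros HB H Hi Hj. destruct (nat_unbounded (B ^ 2)) as [K0 HK0].
  assert (Hc : forall e, 0 < e -> exists N, forall K r, (N <= K)%nat ->
    Cmod (Cminus (mcos_partial n W (K + r) i j) (mcos_partial n W K i j)) <= e).
  { intros e He. destruct (cos_maj_lim B (e / 2) ltac:(lra)) as [N1 HN1]. exists (max K0 N1). intros K r HK.
    assert (HK0K : B ^ 2 <= INR K) by (apply Rle_trans with (INR K0); [auto|apply le_INR; lia]).
    eapply Rle_trans.
    - apply (spec_entry n (msub (mcos_partial n W (K + r)) (mcos_partial n W K)) _ i j Hi Hj).
      apply (spec_mcos_partial_diff n W B); auto.
    - specialize (HN1 (S K) ltac:(lia)). lra. }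
  assert (Cfst : Cauchy_crit (fun K => fst (mcos_partial n W K i j))).
  { apply cauchy_tail. intros e He. destruct (Hc e He) as [N HN]. exists N. intros K r HK.
    eapply Rle_trans; [|apply (HN K r HK)]. eapply Rle_trans; [|apply Rmax_Cmod]. apply Rmax_l. }
  assert (Csnd : Cauchy_crit (fun K => snd (mcos_partial n W K i j))).
  { apply cauchy_tail. intros e He. destruct (Hc e He) as [N HN]. exists N. intros K r HK.
    eapply Rle_trans; [|apply (HN K r HK)]. eapply Rle_trans; [|apply Rmax_Cmod]. apply Rmax_r. }
  destruct (R_complete _ Cfst) as [l1 Hl1], (R_complete _ Csnd) as [l2 Hl2].
  unfold mcos. split; simpl; erewrite Rlim_eq; eauto.
Qed.

Lemma spec_mcos_tail n W B K : 0 <= B -> B ^ 2 <= INR K -> spec_norm_le n W B ->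
  spec_norm_le n (msub (mcos n W) (mcos_partial n W K)) (2 * cos_maj B (S K)).
Proof.
  intros HB HK H. assert (0 <= cos_maj B (S K)) by (apply cos_maj_nonneg; auto).
  apply spec_of_form_le; [lra|]. intros x y lam Hl.
  apply (Un_cv_le (fun L => Cmod (cdot n y (mvec n (msub (mcos_partial n W (K + L)) (mcos_partial n W K)) x)))).
  - apply Cseq_cv_Cmod, Cseq_cv_cdot. intros i l Hi Hl'. unfold msub.
    apply Cseq_cv_minus; [|apply Cseq_cv_const].
    apply (Cseq_cv_shift (fun K => mcos_partial n W K i l)). apply mcos_partial_cv with B; auto.
  - intros L. apply form_le_of_spec; [lra| |auto]. apply spec_mcos_partial_diff; auto.
Qed.

(* Lipschitz constant of the truncated cosine on the ball of radius [B]. *)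
Definition cos_lip B K := Rsumn (S K) (fun m => / INR (fact (2 * m)) * (INR (2 * m) * B ^ Nat.pred (2 * m))).

Lemma mcos_partial_sub n X Z K : msub (mcos_partial n X K) (mcos_partial n Z K) =
  msum (S K) (fun m => mscal (RtoC (cos_coef m)) (mpow_diff n X Z (2 * m))).
Proof. rewrite !mcos_partial_eq. apply functional_extensionality; intro i; apply functional_extensionality; intro j.
  unfold msub, msum. rewrite <- Csum_minus. apply Csum_ext; intros. unfold cos_term, mscal, mpow_diff, msub. cring. Qed.

Lemma rank_mcos_partial_sub n X Z K r : rank_le n (msub X Z) r ->
  rank_le n (msub (mcos_partial n X K) (mcos_partial n Z K)) (S K * (2 * K * r)).
Proof. intros Hr. rewrite mcos_partial_sub. apply rank_msum. intros m Hm. apply rank_scal.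
  apply rank_mono with (2 * m * r)%nat; [apply Nat.mul_le_mono_r; lia|]. apply rank_mpow_diff; auto. Qed.

Lemma spec_mcos_partial_sub n X Z B e K : 0 <= B -> 0 <= e ->
  spec_norm_le n X B -> spec_norm_le n Z B -> spec_norm_le n (msub X Z) e ->
  spec_norm_le n (msub (mcos_partial n X K) (mcos_partial n Z K)) (cos_lip B K * e).
Proof.
  intros HB He HX HZ HE. rewrite mcos_partial_sub. unfold cos_lip. rewrite Rmult_comm, <- Rsumn_scal.
  rewrite (Rsumn_ext _ _ (fun m => Cmod (RtoC (cos_coef m)) * (INR (2 * m) * B ^ Nat.pred (2 * m) * e))).
  - apply spec_msum. intros m Hm.
    assert (0 <= INR (2 * m) * B ^ Nat.pred (2 * m) * e)
      by (apply Rmult_le_pos; auto; apply Rmult_le_pos; [apply pos_INR|apply pow_le; auto]).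
    split; [apply Rmult_le_pos; auto; apply Cmod_ge_0|].
    apply spec_scal; auto. apply spec_mpow_diff; auto.
  - intros m Hm. rewrite Cmod_cos_coef. ring.
Qed.

(* With [Z = Y + E], truncating after [K] terms splits [cos X - cos Y] into [cos_K X - cos_K Z]
   (low rank, as [X - Z = R] is), the two tails, and [cos_K Z - cos_K Y] (small, as [E] is). *)
Lemma mcos_sub_split B eps : 0 <= B -> 0 < eps -> exists K e, (1 <= K)%nat /\ 0 < e /\
  forall n X Y E R r, spec_norm_le n X B -> spec_norm_le n Y B -> spec_norm_le n E e -> rank_le n R r ->
    meq n X (madd (madd Y E) R) ->
    exists Rn En, meq n (msub (mcos n X) (mcos n Y)) (madd Rn En) /\
      rank_le n Rn (S K * (2 * K * r)) /\ spec_norm_le n En eps.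
Proof.
  intros HB Heps. destruct (nat_unbounded (B ^ 2)) as [K0 HK0].
  destruct (cos_maj_lim B (eps / 8) ltac:(lra)) as [N1 HN1].
  set (K := Nat.max (Nat.max K0 N1) 1).
  assert (HK : B ^ 2 <= INR K) by (apply Rle_trans with (INR K0); auto; apply le_INR; unfold K; lia).
  assert (Htail : 0 <= cos_maj B (S K) <= eps / 8)
    by (split; [apply cos_maj_nonneg; auto|left; apply HN1; unfold K; lia]).
  set (lip := cos_lip (B + 1) K).
  assert (Hlip : 0 <= lip).
  { apply Rsumn_nonneg. intros. apply Rmult_le_pos; [left; apply Rinv_0_lt_compat, fact_INR_pos|].
    apply Rmult_le_pos; [apply pos_INR|apply pow_le; lra]. }
  set (e := Rmin 1 (eps / (2 * (lip + 1)))).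
  assert (He : 0 < e) by (apply Rmin_glb_lt; [lra|apply Rdiv_lt_0_compat; lra]).
  assert (Hlipe : lip * e <= eps / 2).
  { apply Rle_trans with (lip * (eps / (2 * (lip + 1)))); [apply Rmult_le_compat_l, Rmin_r; auto|].
    apply Rmult_le_reg_r with (2 * (lip + 1)); [lra|]. field_simplify; nra. }
  exists K, e. split; [unfold K; lia|]. split; [auto|].
  intros n X Y E R r HX HY HE HR HXYER. set (Z := madd Y E).
  assert (HZ : spec_norm_le n Z (B + 1))
    by (apply spec_mono with (B + e); [assert (e <= 1) by apply Rmin_l; lra|apply spec_add; auto; lra]).
  assert (HZY : spec_norm_le n (msub Z Y) e) by (apply (spec_meq n E); auto; intros i j _ _; unfold Z, msub, madd; cring).
  exists (msub (mcos_partial n X K) (mcos_partial n Z K)),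
    (madd (msub (msub (mcos n X) (mcos_partial n X K)) (msub (mcos n Y) (mcos_partial n Y K)))
          (msub (mcos_partial n Z K) (mcos_partial n Y K))).
  split; [|split].
  - intros i j _ _. unfold msub, madd. cring.
  - apply rank_mcos_partial_sub, (rank_meq n R); auto.
    intros i j Hi Hj. unfold msub. rewrite HXYER by auto. unfold Z, madd. cring.
  - apply spec_mono with ((2 * cos_maj B (S K) + 2 * cos_maj B (S K)) + lip * e); [lra|].
    apply spec_add; [lra|apply Rmult_le_pos; lra| |].
    + apply spec_msub; try lra; apply spec_mcos_tail; auto.
    + apply spec_mcos_partial_sub; try lra; auto. apply spec_mono with B; auto; lra.
Qed.

Lemma cont_plus f g : continuity f -> continuity g -> continuity (fun t => f t + g t).
Proof. intros; exact (continuity_plus f g H H0). Qed.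
Lemma cont_minus f g : continuity f -> continuity g -> continuity (fun t => f t - g t).
Proof. intros; exact (continuity_minus f g H H0). Qed.
Lemma cont_mult f g : continuity f -> continuity g -> continuity (fun t => f t * g t).
Proof. intros; exact (continuity_mult f g H H0). Qed.
Lemma cont_opp f : continuity f -> continuity (fun t => - f t).
Proof. intros; exact (continuity_opp f H). Qed.
Lemma cont_const c : continuity (fun _ => c).
Proof. apply continuity_const. intros x y; auto. Qed.
Lemma cont_comp f g : continuity f -> continuity g -> continuity (fun t => g (f t)).
Proof. intros; exact (continuity_comp f g H H0). Qed.
Lemma cont_id : continuity (fun t => t).
Proof. exact (derivable_continuous id derivable_id). Qed.
Lemma cont_scal c : continuity (fun t => c * t).
Proof. apply cont_mult; [apply cont_const|apply cont_id]. Qed.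
Lemma cont_shift th : continuity (fun t => th - t).
Proof. apply cont_minus; [apply cont_const|apply cont_id]. Qed.
Lemma cont_pow2 f : continuity f -> continuity (fun t => f t ^ 2).
Proof. intros. replace (fun t => f t ^ 2) with (fun t => f t * f t)
  by (apply functional_extensionality; intros; ring). apply cont_mult; auto. Qed.

Definition Ccont (g : R -> Cpx) := continuity (fun t => fst (g t)) /\ continuity (fun t => snd (g t)).
Definition cexp (u : R) : Cpx := (cos u, sin u).

Lemma Ccont_plus g h : Ccont g -> Ccont h -> Ccont (fun t => Cplus (g t) (h t)).
Proof. intros [] []; split; simpl; apply cont_plus; auto. Qed.
Lemma Ccont_minus g h : Ccont g -> Ccont h -> Ccont (fun t => Cminus (g t) (h t)).
Proof. intros [] []; split; simpl; apply cont_plus; auto; apply cont_opp; auto. Qed.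
Lemma Ccont_mult g h : Ccont g -> Ccont h -> Ccont (fun t => Cmult (g t) (h t)).
Proof. intros [] []; split; simpl; [apply cont_minus|apply cont_plus]; apply cont_mult; auto. Qed.
Lemma Ccont_const c : Ccont (fun _ => c).
Proof. split; apply cont_const. Qed.
Lemma Ccont_conj g : Ccont g -> Ccont (fun t => Cconj (g t)).
Proof. intros []; split; simpl; auto. apply cont_opp; auto. Qed.
Lemma Ccont_comp g phi : Ccont g -> continuity phi -> Ccont (fun t => g (phi t)).
Proof. intros [H1 H2] Hphi; split; [apply (cont_comp phi (fun u => fst (g u)))|apply (cont_comp phi (fun u => snd (g u)))]; auto. Qed.
Lemma Ccont_cexp phi : continuity phi -> Ccont (fun t => cexp (phi t)).
Proof. intros; split; simpl; apply cont_comp; auto; [apply continuity_cos|apply continuity_sin]. Qed.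
Lemma Ccont_Csum n g : (forall i, (i < n)%nat -> Ccont (g i)) -> Ccont (fun t => Csum n (fun i => g i t)).
Proof. induction n; intros H; simpl; [apply Ccont_const|]. change Cadd with Cplus.
  apply Ccont_plus; [apply IHn; intros|]; apply H; lia. Qed.
Lemma Ccont_mult_cexp h c phi : Ccont h -> continuity phi -> Ccont (fun t => Cmult (h t) (cexp (c * phi t))).
Proof. intros. apply Ccont_mult, Ccont_cexp; auto. apply cont_mult; auto. apply cont_const. Qed.
Lemma cont_Cmod g : Ccont g -> continuity (fun t => Cmod (g t)).
Proof. intros [H1 H2] x. unfold Cmod.
  apply (continuity_pt_comp (fun t => fst (g t) ^ 2 + snd (g t) ^ 2) sqrt x).
  - apply cont_plus; apply cont_pow2; auto.
  - apply continuity_pt_sqrt. nra. Qed.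

Definition Ipi (h : R -> R) : R := RInt h (-PI) PI.
Definition CIpi (g : R -> Cpx) : Cpx := (Ipi (fun t => fst (g t)), Ipi (fun t => snd (g t))).

Lemma ex_RInt_pi h : continuity h -> ex_RInt h (-PI) PI.
Proof. intros H. apply (@ex_RInt_continuous R_CompleteNormedModule). intros z _.
  apply continuity_pt_filterlim. apply H. Qed.
Lemma Ipi_plus g h : continuity g -> continuity h -> Ipi (fun t => g t + h t) = Ipi g + Ipi h.
Proof. intros. apply (RInt_plus g h); apply ex_RInt_pi; auto. Qed.
Lemma Ipi_minus g h : continuity g -> continuity h -> Ipi (fun t => g t - h t) = Ipi g - Ipi h.
Proof. intros. apply (RInt_minus g h); apply ex_RInt_pi; auto. Qed.
Lemma Ipi_scal c g : continuity g -> Ipi (fun t => c * g t) = c * Ipi g.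
Proof. intros. apply (RInt_scal g). apply ex_RInt_pi; auto. Qed.
Lemma Ipi_const c : Ipi (fun _ => c) = 2 * PI * c.
Proof. unfold Ipi. rewrite RInt_const. replace (2 * PI * c) with ((PI - - PI) * c) by ring. reflexivity. Qed.
Lemma Ipi_le g h : continuity g -> continuity h -> (forall t, -PI <= t <= PI -> g t <= h t) -> Ipi g <= Ipi h.
Proof. intros. unfold Ipi. assert (0 < PI) by apply PI_RGT_0.
  apply RInt_le; [lra|apply ex_RInt_pi; auto|apply ex_RInt_pi; auto|intros; apply H1; lra]. Qed.
Lemma Ipi_ext g h : (forall t, -PI <= t <= PI -> g t = h t) -> Ipi g = Ipi h.
Proof. intros H. unfold Ipi. apply RInt_ext. intros x Hx. apply H. assert (0 < PI) by apply PI_RGT_0.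
  rewrite Rmin_left, Rmax_right in Hx by lra. lra. Qed.

Lemma CIpi_plus g h : Ccont g -> Ccont h -> CIpi (fun t => Cplus (g t) (h t)) = Cplus (CIpi g) (CIpi h).
Proof. intros [] []. unfold CIpi, Cplus; simpl. f_equal; apply Ipi_plus; auto. Qed.
Lemma CIpi_minus g h : Ccont g -> Ccont h -> CIpi (fun t => Cminus (g t) (h t)) = Cminus (CIpi g) (CIpi h).
Proof. intros [H1 H2] [H3 H4]. unfold CIpi, Cminus, Cplus, Complex.Copp; simpl. f_equal.
  - rewrite (Ipi_ext _ (fun t => fst (g t) - fst (h t))), Ipi_minus by (auto; intros; ring). ring.
  - rewrite (Ipi_ext _ (fun t => snd (g t) - snd (h t))), Ipi_minus by (auto; intros; ring). ring. Qed.
Lemma CIpi_mult c g : Ccont g -> CIpi (fun t => Cmult c (g t)) = Cmult c (CIpi g).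
Proof. intros [H1 H2]. unfold CIpi, Cmult; simpl. f_equal.
  - rewrite Ipi_minus, !Ipi_scal; auto; apply cont_mult; auto; apply cont_const.
  - rewrite Ipi_plus, !Ipi_scal; auto; apply cont_mult; auto; apply cont_const. Qed.
Lemma CIpi_const c : CIpi (fun _ => c) = Cmult (RtoC (2 * PI)) c.
Proof. unfold CIpi. rewrite !Ipi_const. unfold Cmult, RtoC; simpl. f_equal; ring. Qed.
Lemma CIpi_Csum n g : (forall i, (i < n)%nat -> Ccont (g i)) ->
  CIpi (fun t => Csum n (fun i => g i t)) = Csum n (fun i => CIpi (g i)).
Proof. induction n; intros H; simpl.
  - rewrite CIpi_const. cring.
  - change Cadd with Cplus. rewrite (CIpi_plus (fun t => Csum n (fun i => g i t)) (g n)).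
    + rewrite IHn; [reflexivity|intros; apply H; lia].
    + apply Ccont_Csum; intros; apply H; lia.
    + apply H; lia. Qed.
Lemma CIpi_ext g h : (forall t, -PI <= t <= PI -> g t = h t) -> CIpi g = CIpi h.
Proof. intros H. unfold CIpi. f_equal; apply Ipi_ext; intros; rewrite H; auto. Qed.

Lemma Cmod_CIpi g : Ccont g -> Cmod (CIpi g) <= Ipi (fun t => Cmod (g t)).
Proof.
  intros Hg. set (v := CIpi g). destruct (Req_dec (Cmod v) 0) as [H0|H0].
  { rewrite H0. apply Rle_trans with (Ipi (fun _ => 0)); [rewrite Ipi_const; lra|].
    apply Ipi_le; [apply cont_const|apply cont_Cmod; auto|intros; apply Cmod_ge_0]. }
  assert (Hp : 0 < Cmod v) by (assert (0 <= Cmod v) by apply Cmod_ge_0; lra).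
  (* rotate [v] to the positive real axis: |v|^2 = Re (conj v * v) *)
  assert (Hre : Cmod v ^ 2 = fst (CIpi (fun t => Cmult (Cconj v) (g t)))).
  { rewrite CIpi_mult by auto. fold v. rewrite Cmod2_alt. unfold Cmult, Cconj, Re, Im; simpl. ring. }
  assert (Hb : fst (CIpi (fun t => Cmult (Cconj v) (g t))) <= Cmod v * Ipi (fun t => Cmod (g t))).
  { destruct Hg as [H1 H2]. unfold CIpi; simpl. rewrite <- Ipi_scal by (apply cont_Cmod; split; auto).
    apply Ipi_le.
    - apply cont_minus; apply cont_mult; auto; apply cont_const.
    - apply cont_mult; [apply cont_const|apply cont_Cmod; split; auto].
    - intros t _. rewrite <- Cmod_conj, <- Cmod_mult.
      eapply Rle_trans; [apply Rle_abs|]. apply (re_le_Cmod (Cmult (Cconj v) (g t))). }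
  replace (Cmod v ^ 2) with (Cmod v * Cmod v) in Hre by ring. apply Rmult_le_reg_l with (Cmod v); auto. lra.
Qed.

Lemma cexp_add a b : cexp (a + b) = Cmult (cexp a) (cexp b).
Proof. unfold cexp, Cmult; simpl. rewrite cos_plus, sin_plus. f_equal; ring. Qed.
Lemma cexp_conj a : Cconj (cexp a) = cexp (- a).
Proof. unfold cexp, Cconj; simpl. rewrite cos_neg, sin_neg. auto. Qed.
Lemma Cmod_cexp a : Cmod (cexp a) = 1.
Proof. assert (H : cos a ^ 2 + sin a ^ 2 = 1) by (rewrite <- (sin2_cos2 a); unfold Rsqr; ring).
  unfold Cmod, cexp; simpl fst; simpl snd. rewrite H. apply sqrt_1. Qed.
Lemma cexp_0 : cexp 0 = RtoC 1.
Proof. unfold cexp, RtoC. rewrite cos_0, sin_0. auto. Qed.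
Lemma cexp_eq a b : a = b -> cexp a = cexp b. Proof. intros ->; auto. Qed.

Lemma Ipi_cos_int m : m <> 0%Z -> Ipi (fun t => cos (IZR m * t)) = 0.
Proof.
  intros Hm. assert (Hm' : IZR m <> 0) by (intro H; apply Hm; apply eq_IZR; auto).
  unfold Ipi. apply is_RInt_unique.
  replace 0 with (minus (sin (IZR m * PI) / IZR m) (sin (IZR m * - PI) / IZR m)).
  - apply (is_RInt_derive (fun t => sin (IZR m * t) / IZR m)).
    + intros x _. auto_derive; [auto|field; auto].
    + intros x _. apply continuity_pt_filterlim, cont_comp; [apply cont_scal|apply continuity_cos].
  - unfold minus, plus, opp; simpl. replace (IZR m * - PI) with (IZR (- m) * PI) by (rewrite opp_IZR; ring).
    rewrite !(sin_eq_0_1 (IZR _ * PI)) by (eexists; eauto). field; auto.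
Qed.

Lemma Ipi_sin_int m : m <> 0%Z -> Ipi (fun t => sin (IZR m * t)) = 0.
Proof.
  intros Hm. assert (Hm' : IZR m <> 0) by (intro H; apply Hm; apply eq_IZR; auto).
  unfold Ipi. apply is_RInt_unique.
  replace 0 with (minus (- cos (IZR m * PI) / IZR m) (- cos (IZR m * - PI) / IZR m)).
  - apply (is_RInt_derive (fun t => - cos (IZR m * t) / IZR m)).
    + intros x _. auto_derive; [auto|field; auto].
    + intros x _. apply continuity_pt_filterlim, cont_comp; [apply cont_scal|apply continuity_sin].
  - unfold minus, plus, opp; simpl. replace (IZR m * - PI) with (- (IZR m * PI)) by ring.
    rewrite cos_neg. field; auto.
Qed.

Lemma CIpi_cexp m : CIpi (fun t => cexp (IZR m * t)) = if Z.eqb m 0 then RtoC (2 * PI) else RtoC 0.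
Proof. destruct (Z.eqb_spec m 0) as [->|].
  - rewrite (CIpi_ext _ (fun _ => RtoC 1)), CIpi_const; [cring|].
    intros t _. simpl IZR. rewrite Rmult_0_l. apply cexp_0.
  - unfold CIpi, cexp; simpl. rewrite Ipi_cos_int, Ipi_sin_int; auto. Qed.

Lemma CIpi_cexp_neg m : CIpi (fun t => cexp (- (IZR m * t))) = if Z.eqb m 0 then RtoC (2 * PI) else RtoC 0.
Proof. rewrite (CIpi_ext _ (fun t => cexp (IZR (- m) * t))), CIpi_cexp.
  - destruct (Z.eqb_spec (- m) 0); destruct (Z.eqb_spec m 0); auto; lia.
  - intros t _. apply cexp_eq. rewrite opp_IZR. ring. Qed.

Lemma INR_diff_IZR (i j : nat) : INR j - INR i = IZR (Z.of_nat j - Z.of_nat i).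
Proof. rewrite minus_IZR, <- !INR_IZR_INZ. auto. Qed.

Lemma Rint_Ipi h : continuity h -> Rint h (- PI) PI = Ipi h.
Proof. intros H. unfold Rint. destruct excluded_middle_informative as [e|e].
  - unfold Ipi. rewrite (RInt_Reals h _ _ (proj1_sig (constructive_indefinite_description _ e))). auto.
  - exfalso. apply e. assert (0 < PI) by apply PI_RGT_0.
    exists (continuity_implies_RiemannInt (f := h) (a := -PI) (b := PI) ltac:(lra) (fun x _ => H x)). auto. Qed.

Lemma fourier_CIpi f k : Ccont f ->
  fourier f k = Cmult (RtoC (/ (2 * PI))) (CIpi (fun t => Cmult (f t) (cexp (- (IZR k * t))))).
Proof.
  intros [H1 H2]. assert (0 < PI) by apply PI_RGT_0. assert (Hc := cont_scal (IZR k)).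
  unfold fourier. rewrite !Rint_Ipi.
  - unfold CIpi, Cmult, RtoC; simpl. f_equal.
    + rewrite (Ipi_ext (fun t => fst (f t) * cos (- (IZR k * t)) - snd (f t) * sin (- (IZR k * t)))
        (fun t => fst (f t) * cos (IZR k * t) + snd (f t) * sin (IZR k * t))); [field; lra|].
      intros; rewrite cos_neg, sin_neg; ring.
    + rewrite (Ipi_ext (fun t => fst (f t) * sin (- (IZR k * t)) + snd (f t) * cos (- (IZR k * t)))
        (fun t => snd (f t) * cos (IZR k * t) - fst (f t) * sin (IZR k * t))); [field; lra|].
      intros; rewrite cos_neg, sin_neg; ring.
  - apply cont_minus; apply cont_mult; auto; apply cont_comp; auto; [apply continuity_cos|apply continuity_sin].
  - apply cont_plus; apply cont_mult; auto; apply cont_comp; auto; [apply continuity_cos|apply continuity_sin].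
Qed.

Lemma CIpi_fourier f k : Ccont f ->
  CIpi (fun t => Cmult (f t) (cexp (- (IZR k * t)))) = Cmult (RtoC (2 * PI)) (fourier f k).
Proof. intros Hf. rewrite fourier_CIpi by auto. assert (0 < PI) by apply PI_RGT_0.
  destruct (CIpi _) as [c1 c2]. unfold Cmult, RtoC; simpl. f_equal; field; lra. Qed.

Lemma Ccont_mult_cexp_freq h k : Ccont h -> Ccont (fun t => Cmult (h t) (cexp (- (IZR k * t)))).
Proof. intros. apply Ccont_mult, Ccont_cexp; auto. apply cont_opp, cont_scal. Qed.

Lemma fourier_bound h k d : Ccont h -> (forall t, -PI <= t <= PI -> Cmod (h t) <= d) -> Cmod (fourier h k) <= d.
Proof.
  intros Hh Hd. assert (0 < PI) by apply PI_RGT_0. assert (0 < / (2 * PI)) by (apply Rinv_0_lt_compat; lra).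
  rewrite fourier_CIpi, Cmod_mult, Cmod_R, Rabs_pos_eq by (auto; lra).
  eapply Rle_trans; [apply Rmult_le_compat_l; [lra|apply Cmod_CIpi, Ccont_mult_cexp_freq; auto]|].
  assert (Ipi (fun t => Cmod (Cmult (h t) (cexp (- (IZR k * t))))) <= Ipi (fun _ => d)).
  { apply Ipi_le; [apply cont_Cmod, Ccont_mult_cexp_freq; auto|apply cont_const|].
    intros. rewrite Cmod_mult, Cmod_cexp, Rmult_1_r; auto. }
  rewrite Ipi_const in H1. apply Rmult_le_reg_l with (2 * PI); [lra|]. field_simplify; lra.
Qed.

Lemma fourier_plus g h k : Ccont g -> Ccont h ->
  fourier (fun t => Cplus (g t) (h t)) k = Cplus (fourier g k) (fourier h k).
Proof. intros Hg Hh. rewrite !fourier_CIpi by (auto; apply Ccont_plus; auto).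
  rewrite (CIpi_ext _ (fun t => Cplus (Cmult (g t) (cexp (- (IZR k * t)))) (Cmult (h t) (cexp (- (IZR k * t))))))
    by (intros; cring).
  rewrite CIpi_plus by (apply Ccont_mult_cexp_freq; auto). cring. Qed.

(** * Toeplitz matrices *)

Definition trig_poly n (u : nat -> Cpx) t := Csum n (fun i => Cmult (u i) (cexp (INR i * t))).
Definition toep_mat (a : Z -> Cpx) : mat := fun i j => a (Z.of_nat i - Z.of_nat j)%Z.

Lemma Ccont_trig_poly n u : Ccont (trig_poly n u).
Proof. apply (Ccont_Csum n (fun i t => Cmult (u i) (cexp (INR i * t)))). intros.
  apply Ccont_mult, Ccont_cexp, cont_scal. apply Ccont_const. Qed.

Lemma CIpi_trig_poly_form n h u v phi : Ccont h -> continuity phi ->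
  CIpi (fun t => Cmult (h t) (Cmult (Cconj (trig_poly n u (phi t))) (trig_poly n v (phi t)))) =
  Csum n (fun i => Csum n (fun j => Cmult (Cmult (Cconj (u i)) (v j))
    (CIpi (fun t => Cmult (h t) (cexp ((INR j - INR i) * phi t)))))).
Proof.
  intros Hh Hphi.
  set (F := fun i j t => Cmult (Cmult (Cconj (u i)) (v j)) (Cmult (h t) (cexp ((INR j - INR i) * phi t)))).
  assert (HF : forall i j, Ccont (F i j)).
  { intros i j. apply Ccont_mult; [apply Ccont_const|apply Ccont_mult_cexp; auto]. }
  rewrite (CIpi_ext _ (fun t => Csum n (fun i => Csum n (fun j => F i j t)))).
  - rewrite (CIpi_Csum n (fun i t => Csum n (fun j => F i j t)))
      by (intros; apply (Ccont_Csum n (fun j t => F i j t)); auto).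
    apply Csum_ext; intros i Hi. rewrite (CIpi_Csum n (fun j t => F i j t)) by auto.
    apply Csum_ext; intros j Hj. apply CIpi_mult, Ccont_mult_cexp; auto.
  - intros t _. unfold trig_poly, F. rewrite Csum_conj, Cmult_Csum, <- Csum_mull.
    apply Csum_ext; intros i Hi. rewrite <- Csum_mull. apply Csum_ext; intros j Hj.
    rewrite Cmult_conj, cexp_conj, (cexp_eq ((INR j - INR i) * phi t) (- (INR i * phi t) + INR j * phi t)), cexp_add
      by ring. cring.
Qed.

Lemma parseval n x : Ipi (fun t => Cmod (trig_poly n x t) ^ 2) = 2 * PI * sqnorm n x.
Proof.
  assert (H : Ipi (fun t => Cmod (trig_poly n x t) ^ 2) =
    fst (CIpi (fun t => Cmult (RtoC 1) (Cmult (Cconj (trig_poly n x t)) (trig_poly n x t))))).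
  { unfold CIpi; simpl fst. apply Ipi_ext. intros t _. rewrite Cmod2_alt. unfold Re, Im.
    destruct (trig_poly n x t). simpl. ring. }
  rewrite H, (CIpi_trig_poly_form n _ x x (fun t => t)) by (apply Ccont_const || apply cont_id).
  rewrite (Csum_ext n _ (fun i => Cmult (Cmult (Cconj (x i)) (x i)) (RtoC (2 * PI)))).
  - rewrite Csum_pair. simpl. unfold sqnorm. rewrite <- Rsumn_scal. apply Rsumn_ext; intros.
    unfold Cmod2, Cconj. simpl. ring.
  - intros i Hi.
    rewrite (Csum_ext n _ (fun j => if Nat.eqb j i then Cmult (Cmult (Cconj (x i)) (x i)) (RtoC (2 * PI)) else RtoC 0)).
    { apply Csum_single; auto. }
    intros j Hj. rewrite (CIpi_ext _ (fun t => cexp (IZR (Z.of_nat j - Z.of_nat i) * t))).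
    + rewrite CIpi_cexp. destruct (Nat.eqb_spec j i); destruct (Z.eqb_spec (Z.of_nat j - Z.of_nat i) 0); try lia.
      * subst; auto.
      * cring.
    + intros t _. rewrite <- INR_diff_IZR. cring.
Qed.

Lemma toep_cdot n g y x : Ccont g -> cdot n y (mvec n (toep_mat (fourier g)) x) =
  Cmult (RtoC (/ (2 * PI))) (CIpi (fun t => Cmult (g t) (Cmult (Cconj (trig_poly n y t)) (trig_poly n x t)))).
Proof.
  intros Hg. rewrite (CIpi_trig_poly_form n g y x (fun t => t)) by (auto; apply cont_id).
  rewrite <- Csum_mull. unfold cdot, mvec. apply Csum_ext; intros i Hi.
  rewrite <- !Csum_mull. apply Csum_ext; intros j Hj. unfold toep_mat. rewrite fourier_CIpi by auto.
  rewrite (CIpi_ext (fun t => Cmult (g t) (cexp (- (IZR (Z.of_nat i - Z.of_nat j) * t))))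
                     (fun t => Cmult (g t) (cexp ((INR j - INR i) * t)))).
  - change Cmul with Cmult. cring.
  - intros t _. f_equal. apply cexp_eq. rewrite minus_IZR, <- !INR_IZR_INZ. ring.
Qed.

Lemma toep_form_le n g d : Ccont g -> (forall t, -PI <= t <= PI -> Cmod (g t) <= d) ->
  form_le n (toep_mat (fourier g)) d.
Proof.
  intros Hg Hd x y lam Hl. assert (HP : 0 < PI) by apply PI_RGT_0.
  assert (HP' : 0 < / (2 * PI)) by (apply Rinv_0_lt_compat; lra).
  set (Y := trig_poly n y). set (X := trig_poly n x).
  assert (Hy : continuity (fun t => Cmod (Y t) ^ 2)) by (apply cont_pow2, cont_Cmod, Ccont_trig_poly).
  assert (Hx : continuity (fun t => Cmod (X t) ^ 2)) by (apply cont_pow2, cont_Cmod, Ccont_trig_poly).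
  assert (Hcc : Ccont (fun t => Cmult (g t) (Cmult (Cconj (Y t)) (X t)))).
  { apply Ccont_mult; auto. apply Ccont_mult; [apply Ccont_conj|]; apply Ccont_trig_poly. }
  assert (Hpt : forall t, -PI <= t <= PI -> Cmod (Cmult (g t) (Cmult (Cconj (Y t)) (X t))) <=
    d / 2 * (lam * Cmod (Y t) ^ 2 + / lam * Cmod (X t) ^ 2)).
  { intros t Ht. rewrite !Cmod_mult, Cmod_conj. assert (Hdt := Hd t Ht). assert (0 <= Cmod (g t)) by apply Cmod_ge_0.
    assert (HA := amgm (Cmod (Y t)) (Cmod (X t)) lam Hl).
    assert (0 <= Cmod (Y t) * Cmod (X t)) by (apply Rmult_le_pos; apply Cmod_ge_0).
    apply Rle_trans with (d * (Cmod (Y t) * Cmod (X t))); [apply Rmult_le_compat_r; auto|].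
    replace (d / 2 * (lam * Cmod (Y t) ^ 2 + / lam * Cmod (X t) ^ 2))
      with (d * ((lam * Cmod (Y t) ^ 2 + Cmod (X t) ^ 2 / lam) / 2)) by (unfold Rdiv; ring).
    apply Rmult_le_compat_l; [lra|auto]. }
  assert (Hb : Ipi (fun t => Cmod (Cmult (g t) (Cmult (Cconj (Y t)) (X t)))) <=
    d / 2 * (lam * (2 * PI * sqnorm n y) + / lam * (2 * PI * sqnorm n x))).
  { unfold Y, X. rewrite <- !parseval, <- !Ipi_scal, <- Ipi_plus, <- Ipi_scal; fold Y X;
      try (apply cont_plus); try (apply cont_mult; [apply cont_const|]); auto.
    apply Ipi_le; auto. apply cont_Cmod; auto.
    apply cont_mult; [apply cont_const|]. apply cont_plus; apply cont_mult; auto; apply cont_const. }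
  rewrite toep_cdot, Cmod_mult, Cmod_R, Rabs_pos_eq by (auto; lra). fold Y X.
  eapply Rle_trans; [apply Rmult_le_compat_l; [lra|eapply Rle_trans; [apply Cmod_CIpi; auto|exact Hb]]|].
  right. field. lra.
Qed.

(** * Circulant matrices *)

Definition circ_coef_seq n (a : Z -> Cpx) (k : nat) : Cpx :=
  Cscale (1 / INR n) (Cadd (Cscale (INR (n - k)) (a (Z.of_nat k)))
                           (Cscale (INR k) (a (Z.of_nat k - Z.of_nat n)%Z))).
Definition circ_mat n (a : Z -> Cpx) : mat :=
  fun j k => circ_coef_seq n a (Z.to_nat (Z.modulo (Z.of_nat j - Z.of_nat k) (Z.of_nat n))).

Lemma circ_mat_ge n b i j : (j <= i)%nat -> (i < n)%nat -> circ_mat n b i j = circ_coef_seq n b (i - j).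
Proof. intros. unfold circ_mat. f_equal. rewrite Z.mod_small by lia. lia. Qed.
Lemma circ_mat_lt n b i j : (i < j)%nat -> (j < n)%nat -> circ_mat n b i j = circ_coef_seq n b (n + i - j).
Proof. intros. unfold circ_mat. f_equal.
  replace ((Z.of_nat i - Z.of_nat j) mod Z.of_nat n)%Z with (Z.of_nat i - Z.of_nat j + Z.of_nat n)%Z; [lia|].
  rewrite <- (Z_mod_plus_full (Z.of_nat i - Z.of_nat j) 1). rewrite Z.mod_small; lia. Qed.
Lemma circ_mat_plus n a b : circ_mat n (fun k => Cplus (a k) (b k)) = madd (circ_mat n a) (circ_mat n b).
Proof. apply functional_extensionality; intro i; apply functional_extensionality; intro j.
  unfold circ_mat, madd, circ_coef_seq. set (d := Z.to_nat _).
  destruct (a (Z.of_nat d)), (b (Z.of_nat d)), (a (Z.of_nat d - Z.of_nat n)%Z), (b (Z.of_nat d - Z.of_nat n)%Z).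
  unfold Cscale, Cadd, Cplus; simpl. f_equal; ring. Qed.

Definition cshift n s i := if Nat.ltb (i + s) n then (i + s)%nat else (i + s - n)%nat.
Definition cshift_inv n s i := if Nat.leb s i then (i - s)%nat else (i + n - s)%nat.

Lemma cshift_lo n s i : (i + s < n)%nat -> cshift n s i = (i + s)%nat.
Proof. intros. unfold cshift. destruct (Nat.ltb_spec (i + s) n); lia. Qed.
Lemma cshift_hi n s i : (n <= i + s)%nat -> cshift n s i = (i + s - n)%nat.
Proof. intros. unfold cshift. destruct (Nat.ltb_spec (i + s) n); lia. Qed.
Lemma cshift_inv_shift n s i : (s < n)%nat -> (i < n)%nat -> cshift_inv n s (cshift n s i) = i.
Proof. intros. unfold cshift, cshift_inv. destruct (Nat.ltb_spec (i + s) n).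
  - destruct (Nat.leb_spec s (i + s)); lia.
  - destruct (Nat.leb_spec s (i + s - n)); lia. Qed.

Lemma Csum_cshift n s h : (s < n)%nat -> Csum n (fun i => h (cshift n s i)) = Csum n h.
Proof.
  intros Hs.
  assert (Hsplit : Csum n h = Cplus (Csum s h) (Csum (n - s) (fun i => h (s + i)%nat))).
  { replace n with (s + (n - s))%nat at 1 by lia. apply Csum_add. }
  replace n with ((n - s) + s)%nat at 1 by lia. rewrite Csum_add, Hsplit.
  rewrite (Csum_ext (n - s) _ (fun i => h (s + i)%nat)), (Csum_ext s (fun i => h (cshift n s (n - s + i)%nat)) h).
  - cring.
  - intros i Hi. rewrite cshift_hi by lia. f_equal; lia.
  - intros i Hi. rewrite cshift_lo by lia. f_equal; lia.
Qed.
Lemma Rsumn_cshift n s h : (s < n)%nat -> Rsumn n (fun i => h (cshift n s i)) = Rsumn n h.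
Proof. intros Hs. assert (H := Csum_cshift n s (fun i => RtoC (h i)) Hs). rewrite !Csum_pair in H.
  simpl in H. injection H; auto. Qed.

Lemma shift_average n a i j d : (i < n)%nat -> (j < n)%nat -> (j <= i)%nat -> d = (i - j)%nat ->
  Csum n (fun s => a (Z.of_nat (cshift n s i) - Z.of_nat (cshift n s j))%Z) =
  Cplus (Cmult (RtoC (INR (n - d))) (a (Z.of_nat d))) (Cmult (RtoC (INR d)) (a (Z.of_nat d - Z.of_nat n)%Z)).
Proof.
  intros Hi Hj Hji ->. set (F := fun s => a (Z.of_nat (cshift n s i) - Z.of_nat (cshift n s j))%Z).
  replace n with ((n - i) + (i - j) + j)%nat at 1 by lia. rewrite !Csum_add.
  rewrite (Csum_const_ext (n - i) (a (Z.of_nat (i - j)))), (Csum_const_ext (i - j) (a (Z.of_nat (i - j) - Z.of_nat n)%Z)),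
    (Csum_const_ext j (a (Z.of_nat (i - j)))).
  - replace (n - (i - j))%nat with ((n - i) + j)%nat by lia. rewrite plus_INR.
    destruct (a (Z.of_nat (i - j))), (a (Z.of_nat (i - j) - Z.of_nat n)%Z).
    unfold Cmult, Cplus, RtoC; simpl. f_equal; ring.
  all: intros q Hq; unfold F;
    first [rewrite (cshift_hi n _ i), (cshift_hi n _ j) by lia
          |rewrite (cshift_hi n _ i), (cshift_lo n _ j) by lia
          |rewrite (cshift_lo n _ i), (cshift_lo n _ j) by lia]; f_equal; lia.
Qed.

(* The optimal circulant is the average of the [n] cyclic conjugates of the Toeplitz matrix. *)
Lemma circ_entry n a i j : (i < n)%nat -> (j < n)%nat ->
  circ_mat n a i j = Cmult (RtoC (/ INR n)) (Csum n (fun s => a (Z.of_nat (cshift n s i) - Z.of_nat (cshift n s j))%Z)).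
Proof.
  intros Hi Hj. assert (Hn : 0 < INR n) by (apply lt_0_INR; lia).
  destruct (le_lt_dec j i) as [Hji|Hij].
  - rewrite circ_mat_ge, (shift_average n a i j (i - j)) by auto. unfold circ_coef_seq.
    rewrite !Cscale_eq. unfold Rdiv. rewrite Rmult_1_l. cring.
  - rewrite circ_mat_lt by auto. set (b := fun k => a (- k)%Z).
    rewrite (Csum_ext n _ (fun s => b (Z.of_nat (cshift n s j) - Z.of_nat (cshift n s i))%Z))
      by (intros; unfold b; f_equal; lia).
    rewrite (shift_average n b j i (j - i)) by (auto; lia). unfold circ_coef_seq, b.
    replace (Z.of_nat (n + i - j) - Z.of_nat n)%Z with (- Z.of_nat (j - i))%Z by lia.
    replace (Z.of_nat (n + i - j)) with (- (Z.of_nat (j - i) - Z.of_nat n))%Z by lia.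
    replace (n - (n + i - j))%nat with (j - i)%nat by lia. replace (n + i - j)%nat with (n - (j - i))%nat by lia.
    rewrite !Cscale_eq. unfold Rdiv. rewrite Rmult_1_l. cring.
Qed.

Lemma circ_form_le n a d : (0 < n)%nat -> form_le n (toep_mat a) d -> form_le n (circ_mat n a) d.
Proof.
  intros Hn HT x y lam Hl. assert (Hn' : 0 < INR n) by (apply lt_0_INR; lia).
  set (ys := fun s k => y (cshift_inv n s k)). set (xs := fun s k => x (cshift_inv n s k)).
  set (A := fun s i j => a (Z.of_nat (cshift n s i) - Z.of_nat (cshift n s j))%Z).
  assert (Hs : forall s, (s < n)%nat -> cdot n (ys s) (mvec n (toep_mat a) (xs s)) =
     Csum n (fun i => Cmult (Cconj (y i)) (Csum n (fun j => Cmult (A s i j) (x j))))).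
  { intros s Hsn. unfold cdot, mvec. rewrite <- (Csum_cshift n s) by auto. apply Csum_ext; intros i Hi.
    unfold ys. rewrite cshift_inv_shift by auto. f_equal. rewrite <- (Csum_cshift n s) by auto.
    apply Csum_ext; intros j Hj. unfold xs, toep_mat, A. rewrite cshift_inv_shift by auto. reflexivity. }
  assert (Hcdot : cdot n y (mvec n (circ_mat n a) x) =
    Cmult (RtoC (/ INR n)) (Csum n (fun s => cdot n (ys s) (mvec n (toep_mat a) (xs s))))).
  { rewrite (Csum_ext n _ _ Hs). unfold cdot, mvec. rewrite <- Csum_mull.
    setoid_rewrite <- Csum_mull.
    rewrite (Csum_swap n n (fun s i => Cmult (RtoC (/ INR n)) (Cmult (Cconj (y i)) (Csum n (fun j => Cmult (A s i j) (x j)))))).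
    apply Csum_ext; intros i Hi.
    setoid_rewrite <- Csum_mull. setoid_rewrite <- Csum_mull.
    rewrite (Csum_swap n n (fun s j => Cmult (RtoC (/ INR n)) (Cmult (Cconj (y i)) (Cmult (A s i j) (x j))))).
    apply Csum_ext; intros j Hj. change Cmul with Cmult. rewrite circ_entry by auto.
    rewrite <- !Csum_mull, <- Csum_mulr, <- Csum_mull. apply Csum_ext; intros s Hs'. unfold A. cring. }
  assert (Hny : forall s, (s < n)%nat -> sqnorm n (ys s) = sqnorm n y).
  { intros s Hs'. unfold sqnorm. rewrite <- (Rsumn_cshift n s) by auto.
    apply Rsumn_ext; intros. unfold ys. rewrite cshift_inv_shift; auto. }
  assert (Hnx : forall s, (s < n)%nat -> sqnorm n (xs s) = sqnorm n x).
  { intros s Hs'. unfold sqnorm. rewrite <- (Rsumn_cshift n s) by auto.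
    apply Rsumn_ext; intros. unfold xs. rewrite cshift_inv_shift; auto. }
  assert (0 < / INR n) by (apply Rinv_0_lt_compat; lra).
  rewrite Hcdot, Cmod_mult, Cmod_R, Rabs_pos_eq by lra.
  eapply Rle_trans; [apply Rmult_le_compat_l; [lra|apply Cmod_Csum]|].
  eapply Rle_trans; [apply Rmult_le_compat_l; [lra|apply Rsumn_le; intros s Hs'; apply (HT _ _ lam Hl)]|].
  rewrite (Rsumn_ext n _ (fun _ => d / 2 * (lam * sqnorm n y + sqnorm n x / lam))), Rsumn_const.
  - right. field. lra.
  - intros s Hs'. rewrite Hny, Hnx; auto.
Qed.

(** * Fejer approximation *)

Lemma cos_close s d : 0 < d <= PI -> -2 * PI <= s <= 2 * PI -> cos d < cos s ->
  Rabs s < d \/ Rabs (s - 2 * PI) < d \/ Rabs (s + 2 * PI) < d.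
Proof.
  intros Hd Hs Hc. assert (HP : 0 < PI) by apply PI_RGT_0.
  assert (Hpos : forall u, 0 <= u <= PI -> cos d < cos u -> u < d).
  { intros u Hu Hcu. destruct (Rlt_le_dec u d); auto. exfalso. destruct (Req_dec u d); [subst; lra|].
    assert (cos u < cos d) by (apply cos_decreasing_1; lra). lra. }
  assert (Hrefl : forall u, cos (2 * PI - u) = cos u) by (intros; rewrite cos_minus, cos_2PI, sin_2PI; ring).
  destruct (Rle_dec 0 s); [destruct (Rle_dec s PI)|destruct (Rle_dec (-PI) s)].
  - left. rewrite Rabs_pos_eq by lra. apply Hpos; auto; lra.
  - right; left. rewrite Rabs_left1 by lra. assert (2 * PI - s < d); [apply Hpos; [lra|rewrite Hrefl; auto]|lra].
  - left. rewrite Rabs_left1 by lra. apply Hpos; [lra|rewrite cos_neg; auto].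
  - right; right. rewrite Rabs_pos_eq by lra.
    assert (2 * PI - (- s) < d); [apply Hpos; [lra|rewrite Hrefl, cos_neg; auto]|lra].
Qed.

(* Uniform continuity measured by [1 - cos (th - t)], which is insensitive to periodic wrap-around. *)
Lemma periodic_unif_cont f : Ccont f -> (forall t, f (t + 2 * PI) = f t) ->
  forall eta, 0 < eta -> exists kap, 0 < kap /\ forall th t, -PI <= th <= PI -> -PI <= t <= PI ->
    1 - cos (th - t) < kap -> Cmod (Cminus (f th) (f t)) <= eta.
Proof.
  intros [H1 H2] Hp eta Heta. assert (HP : 0 < PI) by apply PI_RGT_0.
  set (X := fun c => -3 * PI <= c <= 3 * PI).
  assert (U1 := Heine _ X (compact_P3 _ _) (fun x _ => H1 x)).
  assert (U2 := Heine _ X (compact_P3 _ _) (fun x _ => H2 x)).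
  destruct (U1 (mkposreal (eta / 2) ltac:(lra))) as [d1 Hd1], (U2 (mkposreal (eta / 2) ltac:(lra))) as [d2 Hd2].
  simpl in *. set (d := Rmin (Rmin d1 d2) PI).
  assert (Hd : 0 < d <= PI).
  { unfold d. split; [|apply Rmin_r]. apply Rmin_glb_lt; auto. apply Rmin_glb_lt; apply cond_pos. }
  assert (Hdd1 : d <= d1) by (unfold d; eapply Rle_trans; [apply Rmin_l|apply Rmin_l]).
  assert (Hdd2 : d <= d2) by (unfold d; eapply Rle_trans; [apply Rmin_l|apply Rmin_r]).
  exists (1 - cos d). split.
  { assert (cos d < cos 0) by (apply cos_decreasing_1; lra). rewrite cos_0 in H. lra. }
  intros th t Hth Ht Hc.
  assert (Hgen : forall u, X th -> X u -> Rabs (th - u) < d -> Cmod (Cminus (f th) (f u)) <= eta).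
  { intros u Xth Xu Hu. eapply Rle_trans; [apply Cmod_le_sum|]. simpl.
    assert (A1 := Hd1 th u Xth Xu ltac:(lra)). assert (A2 := Hd2 th u Xth Xu ltac:(lra)).
    unfold Rminus in A1, A2. lra. }
  assert (Xth : X th) by (unfold X; lra).
  destruct (cos_close (th - t) d Hd ltac:(lra) ltac:(lra)) as [C|[C|C]].
  - apply Hgen; auto. unfold X; lra.
  - rewrite <- (Hp t). apply Hgen; auto; [unfold X; lra|].
    replace (th - (t + 2 * PI)) with (th - t - 2 * PI) by ring; auto.
  - replace (f t) with (f (t - 2 * PI)) by (rewrite <- (Hp (t - 2 * PI)); f_equal; ring).
    apply Hgen; auto; [unfold X; lra|]. replace (th - (t - 2 * PI)) with (th - t + 2 * PI) by ring; auto.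
Qed.

Definition ones : nat -> Cpx := fun _ => RtoC 1.
Definition dirichlet L s := trig_poly L ones s.
(* [L] times the Fejer kernel centred at [th]. *)
Definition fejer_ker L th t := Cmult (Cconj (dirichlet L (th - t))) (dirichlet L (th - t)).

Lemma dirichlet_geom L s : Cmult (dirichlet L s) (Cminus (cexp s) (RtoC 1)) = Cminus (cexp (INR L * s)) (RtoC 1).
Proof.
  induction L.
  - unfold dirichlet, trig_poly. simpl Csum. simpl INR. rewrite Rmult_0_l, cexp_0. cring.
  - unfold dirichlet, trig_poly in *. simpl Csum. change Cadd with Cplus.
    set (S := Csum L (fun i => Cmult (ones i) (cexp (INR i * s)))) in *.
    transitivity (Cplus (Cmult S (Cminus (cexp s) (RtoC 1))) (Cminus (Cmult (cexp (INR L * s)) (cexp s)) (cexp (INR L * s))));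
      [unfold ones; cring|].
    rewrite IHL, <- cexp_add, S_INR, (cexp_eq ((INR L + 1) * s) (INR L * s + s)) by ring. cring.
Qed.

Lemma Cmod_cexp_sub1 s : Cmod (Cminus (cexp s) (RtoC 1)) ^ 2 = 2 - 2 * cos s.
Proof. rewrite Cmod2_alt. unfold Re, Im, cexp, Cminus, Cplus, Complex.Copp, RtoC; simpl.
  assert (H := sin2_cos2 s). unfold Rsqr in H. nra. Qed.

Lemma dirichlet_bound L s : cos s < 1 -> Cmod (dirichlet L s) ^ 2 <= 4 / (2 - 2 * cos s).
Proof.
  intros Hc. assert (H := f_equal Cmod (dirichlet_geom L s)). rewrite Cmod_mult in H.
  assert (H2 : Cmod (dirichlet L s) ^ 2 * (2 - 2 * cos s) = 2 - 2 * cos (INR L * s))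
    by (rewrite <- !Cmod_cexp_sub1, <- Rpow_mult_distr, H; auto).
  assert (cos (INR L * s) >= -1) by (assert (H3 := COS_bound (INR L * s)); lra).
  apply Rmult_le_reg_r with (2 - 2 * cos s); [lra|]. unfold Rdiv. rewrite Rmult_assoc, Rinv_l by lra. lra.
Qed.

Lemma Ccont_dirichlet_shift L th : Ccont (fun t => dirichlet L (th - t)).
Proof. apply (Ccont_comp (dirichlet L)); [apply Ccont_trig_poly|apply cont_shift]. Qed.
Lemma Ccont_fejer_ker L th : Ccont (fejer_ker L th).
Proof. apply Ccont_mult; [apply (Ccont_conj (fun t => dirichlet L (th - t)))|]; apply Ccont_dirichlet_shift. Qed.
Lemma fejer_ker_mod L th t : Cmod (fejer_ker L th t) = Cmod (dirichlet L (th - t)) ^ 2.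
Proof. unfold fejer_ker. rewrite Cmod_mult, Cmod_conj. ring. Qed.
Lemma fejer_ker_re L th t : fst (fejer_ker L th t) = Cmod (dirichlet L (th - t)) ^ 2.
Proof. unfold fejer_ker. rewrite Cmod2_alt. unfold Re, Im. destruct (dirichlet L (th - t)).
  unfold Cmult, Cconj; simpl. ring. Qed.

Lemma fejer_ker_expand L h th : Ccont h ->
  CIpi (fun t => Cmult (h t) (fejer_ker L th t)) =
  Csum L (fun i => Csum L (fun j => Cmult (cexp ((INR j - INR i) * th))
    (CIpi (fun t => Cmult (h t) (cexp (- (IZR (Z.of_nat j - Z.of_nat i) * t))))))).
Proof.
  intros Hh. unfold fejer_ker, dirichlet. rewrite (CIpi_trig_poly_form L h ones ones (fun t => th - t)) by (auto; apply cont_shift).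
  apply Csum_ext; intros i Hi. apply Csum_ext; intros j Hj.
  rewrite (CIpi_ext _ (fun t => Cmult (cexp ((INR j - INR i) * th)) (Cmult (h t) (cexp (- (IZR (Z.of_nat j - Z.of_nat i) * t)))))).
  - rewrite CIpi_mult by (apply Ccont_mult_cexp_freq; auto). unfold ones.
    replace (Cconj (RtoC 1)) with (RtoC 1) by (unfold Cconj, RtoC; simpl; f_equal; ring). cring.
  - intros t _. rewrite <- INR_diff_IZR.
    rewrite (cexp_eq ((INR j - INR i) * (th - t)) ((INR j - INR i) * th + - ((INR j - INR i) * t))), cexp_add by ring.
    cring.
Qed.

Lemma CIpi_fejer_ker L th : CIpi (fejer_ker L th) = RtoC (2 * PI * INR L).
Proof.
  rewrite (CIpi_ext _ (fun t => Cmult (RtoC 1) (fejer_ker L th t))) by (intros; cring).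
  rewrite fejer_ker_expand by apply Ccont_const.
  rewrite (Csum_ext L _ (fun i => RtoC (2 * PI))).
  { rewrite Csum_const. unfold Cmult, RtoC; simpl; f_equal; ring. }
  intros i Hi. rewrite (Csum_ext L _ (fun j => if Nat.eqb j i then RtoC (2 * PI) else RtoC 0)).
  { apply Csum_single; auto. }
  intros j Hj. rewrite (CIpi_ext _ (fun t => cexp (- (IZR (Z.of_nat j - Z.of_nat i) * t)))) by (intros; cring).
  rewrite CIpi_cexp_neg. destruct (Nat.eqb_spec j i); destruct (Z.eqb_spec (Z.of_nat j - Z.of_nat i) 0); try lia.
  - subst. rewrite Rminus_diag, Rmult_0_l, cexp_0. cring.
  - cring.
Qed.

(* The Fejer mean of order [L]: [sum_(|k| < L) (1 - |k|/L) a_k e^{ik th}], written as a double sum. *)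
Definition fejer_mean L (a : Z -> Cpx) th := Cmult (RtoC (/ INR L))
  (Csum L (fun i => Csum L (fun j => Cmult (a (Z.of_nat j - Z.of_nat i)%Z) (cexp ((INR j - INR i) * th))))).

Lemma Ccont_fejer_mean L a : Ccont (fejer_mean L a).
Proof.
  unfold fejer_mean. apply Ccont_mult; [apply Ccont_const|].
  apply (Ccont_Csum L (fun i th => Csum L (fun j => Cmult (a (Z.of_nat j - Z.of_nat i)%Z) (cexp ((INR j - INR i) * th))))).
  intros i Hi. apply (Ccont_Csum L (fun j th => Cmult (a (Z.of_nat j - Z.of_nat i)%Z) (cexp ((INR j - INR i) * th)))).
  intros j Hj. apply Ccont_mult, Ccont_cexp, cont_scal. apply Ccont_const.
Qed.

Lemma fourier_fejer_mean L a k : (Z.of_nat L <= Z.abs k)%Z -> fourier (fejer_mean L a) k = RtoC 0.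
Proof.
  intros Hk. rewrite fourier_CIpi by apply Ccont_fejer_mean.
  set (F := fun i j t => Cmult (Cmult (RtoC (/ INR L)) (a (Z.of_nat j - Z.of_nat i)%Z))
                               (cexp (- (IZR (k - (Z.of_nat j - Z.of_nat i)) * t)))).
  assert (HF : forall i j, Ccont (F i j))
    by (intros; unfold F; apply Ccont_mult; [apply Ccont_const|apply Ccont_cexp, cont_opp, cont_scal]).
  rewrite (CIpi_ext _ (fun t => Csum L (fun i => Csum L (fun j => F i j t)))).
  - rewrite (CIpi_Csum L (fun i t => Csum L (fun j => F i j t))) by (intros; apply (Ccont_Csum L (fun j t => F i j t)); auto).
    rewrite (Csum_ext L _ (fun _ => RtoC 0)), Csum_zero; [cring|].
    intros i Hi. rewrite (CIpi_Csum L (fun j t => F i j t)) by auto.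
    rewrite (Csum_ext L _ (fun _ => RtoC 0)); [apply Csum_zero|].
    intros j Hj. unfold F. rewrite CIpi_mult, CIpi_cexp_neg by (apply Ccont_cexp, cont_opp, cont_scal).
    destruct (Z.eqb_spec (k - (Z.of_nat j - Z.of_nat i)) 0); [lia|cring].
  - intros t _. unfold fejer_mean, F. rewrite <- Csum_mull, <- Csum_mulr. apply Csum_ext; intros i Hi.
    rewrite <- Csum_mull, <- Csum_mulr. apply Csum_ext; intros j Hj.
    rewrite (cexp_eq (- (IZR (k - (Z.of_nat j - Z.of_nat i)) * t)) ((INR j - INR i) * t + - (IZR k * t))), cexp_add.
    + cring.
    + rewrite !minus_IZR, <- !INR_IZR_INZ. ring.
Qed.

Lemma fejer_mean_sub f L th : Ccont f -> (0 < L)%nat ->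
  Cminus (f th) (fejer_mean L (fourier f) th) =
  Cmult (RtoC (/ (2 * PI * INR L))) (CIpi (fun t => Cmult (Cminus (f th) (f t)) (fejer_ker L th t))).
Proof.
  intros Hf HL. assert (0 < PI) by apply PI_RGT_0. assert (0 < INR L) by (apply lt_0_INR; auto).
  assert (Hmean : fejer_mean L (fourier f) th =
    Cmult (RtoC (/ (2 * PI * INR L))) (CIpi (fun t => Cmult (f t) (fejer_ker L th t)))).
  { rewrite fejer_ker_expand by auto. unfold fejer_mean. rewrite <- !Csum_mull. apply Csum_ext; intros i Hi.
    rewrite <- !Csum_mull. apply Csum_ext; intros j Hj. rewrite CIpi_fourier by auto.
    destruct (fourier f (Z.of_nat j - Z.of_nat i)%Z). unfold cexp, Cmult, RtoC; simpl. f_equal; field; lra. }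
  assert (Hconst : f th = Cmult (RtoC (/ (2 * PI * INR L))) (CIpi (fun t => Cmult (f th) (fejer_ker L th t)))).
  { rewrite CIpi_mult, CIpi_fejer_ker by apply Ccont_fejer_ker.
    destruct (f th). unfold Cmult, RtoC; simpl. f_equal; field; lra. }
  rewrite Hmean, Hconst at 1.
  rewrite (CIpi_ext (fun t => Cmult (Cminus (f th) (f t)) (fejer_ker L th t))
    (fun t => Cminus (Cmult (f th) (fejer_ker L th t)) (Cmult (f t) (fejer_ker L th t)))) by (intros; cring).
  rewrite CIpi_minus; [cring| |]; apply Ccont_mult; auto; try apply Ccont_const; apply Ccont_fejer_ker.
Qed.

(* Near [th] the kernel is weighted by a small oscillation; away from it the kernel is O(1/kap). *)
Lemma fejer_integrand_bound f F0 kap eta L th t : 0 < kap -> 0 <= F0 -> 0 <= eta ->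
  Cmod (f th) <= F0 -> Cmod (f t) <= F0 ->
  (1 - cos (th - t) < kap -> Cmod (Cminus (f th) (f t)) <= eta) ->
  Cmod (Cmult (Cminus (f th) (f t)) (fejer_ker L th t)) <=
    eta * Cmod (dirichlet L (th - t)) ^ 2 + 4 * F0 / kap.
Proof.
  intros Hk HF0 Heta Hth Ht Hu. rewrite Cmod_mult, fejer_ker_mod.
  assert (0 <= Cmod (dirichlet L (th - t)) ^ 2) by apply pow2_ge_0.
  assert (0 <= 4 * F0 / kap) by (apply Rmult_le_pos; [lra|left; apply Rinv_0_lt_compat; lra]).
  assert (Hfd : Cmod (Cminus (f th) (f t)) <= 2 * F0).
  { unfold Cminus. eapply Rle_trans; [apply Cmod_triangle|]. rewrite Cmod_opp. lra. }
  destruct (Rlt_dec (1 - cos (th - t)) kap) as [Hc|Hc].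
  - specialize (Hu Hc).
    assert (Cmod (Cminus (f th) (f t)) * Cmod (dirichlet L (th - t)) ^ 2 <= eta * Cmod (dirichlet L (th - t)) ^ 2)
      by (apply Rmult_le_compat_r; auto). lra.
  - assert (Hcos : cos (th - t) < 1) by lra.
    assert (HD := dirichlet_bound L (th - t) Hcos).
    assert (4 / (2 - 2 * cos (th - t)) <= 2 / kap).
    { apply Rmult_le_reg_r with ((2 - 2 * cos (th - t)) * kap); [nra|]. unfold Rdiv. field_simplify; nra. }
    assert (Cmod (Cminus (f th) (f t)) * Cmod (dirichlet L (th - t)) ^ 2 <= 2 * F0 * (2 / kap))
      by (apply Rmult_le_compat; [apply Cmod_ge_0|lra|lra|lra]).
    assert (0 <= eta * Cmod (dirichlet L (th - t)) ^ 2) by (apply Rmult_le_pos; auto).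
    replace (4 * F0 / kap) with (2 * F0 * (2 / kap)) by (field; lra). lra.
Qed.

Lemma Ccont_bounded f : Ccont f -> exists F0, 0 <= F0 /\ forall t, -PI <= t <= PI -> Cmod (f t) <= F0.
Proof.
  intros Hf. assert (0 < PI) by apply PI_RGT_0.
  destruct (continuity_ab_maj (fun t => Cmod (f t)) (-PI) PI ltac:(lra) (fun c _ => cont_Cmod f Hf c)) as [Mx [HMx _]].
  exists (Cmod (f Mx)). split; [apply Cmod_ge_0|intros; apply HMx; auto].
Qed.

Lemma Ipi_dirichlet_sq L th : Ipi (fun t => Cmod (dirichlet L (th - t)) ^ 2) = 2 * PI * INR L.
Proof. rewrite (Ipi_ext _ (fun t => fst (fejer_ker L th t))) by (intros; rewrite fejer_ker_re; auto).
  change (Ipi (fun t => fst (fejer_ker L th t))) with (fst (CIpi (fejer_ker L th))).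
  rewrite CIpi_fejer_ker. auto. Qed.

Lemma fejer_approx f : Ccont f -> (forall t, f (t + 2 * PI) = f t) -> forall eta, 0 < eta ->
  exists L, (1 <= L)%nat /\
    forall th, -PI <= th <= PI -> Cmod (Cminus (f th) (fejer_mean L (fourier f) th)) <= eta.
Proof.
  intros Hf Hper eta Heta. assert (HP : 0 < PI) by apply PI_RGT_0.
  destruct (Ccont_bounded f Hf) as [F0 [HF0 HFb]].
  destruct (periodic_unif_cont f Hf Hper (eta / 2) ltac:(lra)) as [kap [Hk Hu]].
  destruct (nat_unbounded (8 * F0 / (kap * eta) + 1)) as [L HL].
  assert (HF0' : 0 <= 8 * F0 / (kap * eta)) by (apply Rmult_le_pos; [lra|left; apply Rinv_0_lt_compat; nra]).
  assert (HL1 : 1 <= INR L) by lra.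
  assert (HL0 : (1 <= L)%nat) by (destruct L; [simpl in HL1; lra|lia]).
  assert (H8 : 8 * F0 <= kap * eta * INR L).
  { assert (H : 8 * F0 / (kap * eta) <= INR L) by lra.
    apply Rmult_le_compat_r with (r := kap * eta) in H; [|nra].
    unfold Rdiv in H. rewrite Rmult_assoc, Rinv_l in H by nra. nra. }
  exists L. split; [auto|]. intros th Hth.
  assert (Hw : 0 < / (2 * PI * INR L)) by (apply Rinv_0_lt_compat; nra).
  assert (HS : continuity (fun t => Cmod (dirichlet L (th - t)) ^ 2))
    by apply cont_pow2, cont_Cmod, Ccont_dirichlet_shift.
  rewrite fejer_mean_sub, Cmod_mult, Cmod_R, Rabs_pos_eq by (auto; lra).
  eapply Rle_trans.
  { apply Rmult_le_compat_l; [lra|]. eapply Rle_trans.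
    - apply Cmod_CIpi. apply Ccont_mult; [apply Ccont_minus; [apply Ccont_const|auto]|apply Ccont_fejer_ker].
    - apply (Ipi_le _ (fun t => eta / 2 * Cmod (dirichlet L (th - t)) ^ 2 + 4 * F0 / kap)).
      + apply cont_Cmod, Ccont_mult; [apply Ccont_minus; [apply Ccont_const|auto]|apply Ccont_fejer_ker].
      + apply cont_plus; [apply cont_mult; [apply cont_const|auto]|apply cont_const].
      + intros t Ht. apply fejer_integrand_bound; auto; lra. }
  rewrite Ipi_plus, Ipi_scal, Ipi_const, Ipi_dirichlet_sq by (auto; apply cont_mult; auto; apply cont_const).
  replace (/ (2 * PI * INR L) * (eta / 2 * (2 * PI * INR L) + 2 * PI * (4 * F0 / kap)))
    with (eta / 2 + 4 * F0 / (kap * INR L)) by (field; repeat split; lra).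
  assert (4 * F0 / (kap * INR L) <= eta / 2).
  { apply Rmult_le_reg_r with (kap * INR L); [nra|]. unfold Rdiv. rewrite Rmult_assoc, Rinv_l by nra. lra. }
  lra.
Qed.

(** * Circulant minus Toeplitz for a trigonometric polynomial *)

Lemma circ_sub_toep_ge n b i j : (j <= i)%nat -> (i < n)%nat ->
  msub (circ_mat n b) (toep_mat b) i j =
  Cscale (INR (i - j) / INR n) (Cminus (b (Z.of_nat (i - j) - Z.of_nat n)%Z) (b (Z.of_nat (i - j)))).
Proof.
  intros Hji Hi. assert (0 < INR n) by (apply lt_0_INR; lia).
  unfold msub, toep_mat. rewrite circ_mat_ge by auto. unfold circ_coef_seq.
  replace (Z.of_nat i - Z.of_nat j)%Z with (Z.of_nat (i - j)) by lia.
  destruct (b (Z.of_nat (i - j))), (b (Z.of_nat (i - j) - Z.of_nat n)%Z). rewrite minus_INR by lia.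
  unfold Cscale, Cadd, Cminus, Cplus, Complex.Copp; simpl. f_equal; field; lra.
Qed.

Lemma circ_sub_toep_lt n b i j : (i < j)%nat -> (j < n)%nat ->
  msub (circ_mat n b) (toep_mat b) i j =
  Cscale (INR (j - i) / INR n) (Cminus (b (Z.of_nat (n + i - j))) (b (Z.of_nat i - Z.of_nat j)%Z)).
Proof.
  intros Hij Hj. assert (0 < INR n) by (apply lt_0_INR; lia).
  unfold msub, toep_mat. rewrite circ_mat_lt by auto. unfold circ_coef_seq.
  replace (Z.of_nat (n + i - j) - Z.of_nat n)%Z with (Z.of_nat i - Z.of_nat j)%Z by lia.
  destruct (b (Z.of_nat (n + i - j))), (b (Z.of_nat i - Z.of_nat j)%Z).
  rewrite !minus_INR, plus_INR by lia.
  unfold Cscale, Cadd, Cminus, Cplus, Complex.Copp; simpl. f_equal; field; lra.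
Qed.

Definition in_band L i j := andb (Nat.ltb i (j + L)) (Nat.ltb j (i + L)).
(* Columns at distance >= L from both borders, where no wrap-around term survives. *)
Definition inner_col n L j := andb (Nat.leb L j) (Nat.ltb (j + L) n).

Lemma scaled_coef_bound L C n d z : (0 < n)%nat -> (d <= L)%nat -> Cmod z <= C ->
  Cmod (Cscale (INR d / INR n) z) <= INR L * C / INR n.
Proof.
  intros Hn Hd Hz. assert (0 < INR n) by (apply lt_0_INR; lia).
  assert (INR d <= INR L) by (apply le_INR; lia). assert (0 <= INR d) by apply pos_INR.
  assert (0 <= Cmod z) by apply Cmod_ge_0.
  rewrite Cmod_Cscale, Rabs_pos_eq by (apply Rmult_le_pos; [lra|left; apply Rinv_0_lt_compat; lra]).
  unfold Rdiv. replace (INR L * C * / INR n) with (INR L * / INR n * C) by ring.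
  apply Rmult_le_compat; try lra; [apply Rmult_le_pos; [lra|left; apply Rinv_0_lt_compat; lra]|].
  apply Rmult_le_compat_r; [left; apply Rinv_0_lt_compat|]; lra.
Qed.

Lemma circ_sub_toep_entry n L b C i j : (i < n)%nat -> (j < n)%nat -> inner_col n L j = true ->
  (forall k, (Z.of_nat L <= Z.abs k)%Z -> b k = RtoC 0) -> (forall k, Cmod (b k) <= C) ->
  Cmod (msub (circ_mat n b) (toep_mat b) i j) <= if in_band L i j then INR L * C / INR n else 0.
Proof.
  intros Hi Hj Hm Hb HC. unfold inner_col in Hm. apply Bool.andb_true_iff in Hm. destruct Hm as [Hm1 Hm2].
  apply Nat.leb_le in Hm1. apply Nat.ltb_lt in Hm2. unfold in_band.
  destruct (le_lt_dec j i) as [Hji|Hij].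
  - rewrite circ_sub_toep_ge, (Hb (Z.of_nat (i - j) - Z.of_nat n)%Z) by lia.
    destruct (Nat.ltb_spec i (j + L)); destruct (Nat.ltb_spec j (i + L)); simpl andb;
      [apply scaled_coef_bound; [lia|lia|]; unfold Cminus; rewrite Complex.Cplus_0_l, Cmod_opp; auto|..];
      rewrite (Hb (Z.of_nat (i - j))) by lia; replace (Cminus (RtoC 0) (RtoC 0)) with (RtoC 0) by cring;
      rewrite Cmod_Cscale, Cmod_0; lra.
  - rewrite circ_sub_toep_lt, (Hb (Z.of_nat (n + i - j))) by lia.
    destruct (Nat.ltb_spec i (j + L)); destruct (Nat.ltb_spec j (i + L)); simpl andb;
      [apply scaled_coef_bound; [lia|lia|]; unfold Cminus; rewrite Complex.Cplus_0_l, Cmod_opp; auto|..];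
      rewrite (Hb (Z.of_nat i - Z.of_nat j)%Z) by lia; replace (Cminus (RtoC 0) (RtoC 0)) with (RtoC 0) by cring;
      rewrite Cmod_Cscale, Cmod_0; lra.
Qed.

Lemma count_window n a w mu : 0 <= mu ->
  Rsumn n (fun j => if andb (Nat.leb a j) (Nat.ltb j (a + w)) then mu else 0) <= INR w * mu.
Proof.
  intros Hmu.
  assert (H : forall n, Rsumn n (fun j => if andb (Nat.leb a j) (Nat.ltb j (a + w)) then mu else 0) =
    INR (Nat.min n (a + w) - Nat.min n a) * mu).
  { induction n0; [simpl; ring|]. simpl Rsumn. rewrite IHn0.
    destruct (Nat.leb_spec a n0); destruct (Nat.ltb_spec n0 (a + w)); simpl andb.
    - replace (Nat.min (S n0) (a + w) - Nat.min (S n0) a)%nat with (S (Nat.min n0 (a + w) - Nat.min n0 a)) by lia.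
      rewrite S_INR. ring.
    - all: replace (Nat.min (S n0) (a + w) - Nat.min (S n0) a)%nat with (Nat.min n0 (a + w) - Nat.min n0 a)%nat
        by lia; ring. }
  rewrite H. apply Rmult_le_compat_r; auto. apply le_INR. lia.
Qed.

Lemma band_sum n i L mu g : 0 <= mu -> (forall j, (j < n)%nat -> g j <= if in_band L i j then mu else 0) ->
  Rsumn n g <= INR (2 * L) * mu.
Proof.
  intros Hmu Hg. eapply Rle_trans; [|apply (count_window n (i + 1 - L) (2 * L) mu Hmu)].
  apply Rsumn_le. intros j Hj. eapply Rle_trans; [apply Hg; auto|]. unfold in_band.
  destruct (i <? j + L) eqn:E1; destruct (j <? i + L) eqn:E2; destruct (i + 1 - L <=? j) eqn:E3;
    destruct (j <? i + 1 - L + 2 * L) eqn:E4; simpl andb; cbv iota; try lra; exfalso;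
    rewrite ?Nat.ltb_lt, ?Nat.ltb_ge, ?Nat.leb_le, ?Nat.leb_gt in *; lia.
Qed.

Lemma in_band_sym L i j : in_band L i j = in_band L j i.
Proof. unfold in_band. apply Bool.andb_comm. Qed.

Lemma circ_sub_toep_band_split n L b C : (0 < n)%nat ->
  (forall k, (Z.of_nat L <= Z.abs k)%Z -> b k = RtoC 0) -> (forall k, Cmod (b k) <= C) -> 0 <= C ->
  exists Rm Em, meq n (msub (circ_mat n b) (toep_mat b)) (madd Rm Em) /\ rank_le n Rm (2 * L) /\
    spec_norm_le n Em (INR (2 * L) * (INR L * C / INR n)).
Proof.
  intros Hn Hb HC HC0. set (D := msub (circ_mat n b) (toep_mat b)).
  exists (fun i j => if inner_col n L j then RtoC 0 else D i j), (fun i j => if inner_col n L j then D i j else RtoC 0).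
  assert (Hmu : 0 <= INR L * C / INR n)
    by (apply Rmult_le_pos; [apply Rmult_le_pos; [apply pos_INR|auto]|left; apply Rinv_0_lt_compat, lt_0_INR; auto]).
  assert (Hent : forall i j, (i < n)%nat -> (j < n)%nat ->
    Cmod (if inner_col n L j then D i j else RtoC 0) <= if in_band L i j then INR L * C / INR n else 0).
  { intros i j Hi Hj. destruct (inner_col n L j) eqn:Hm.
    - apply circ_sub_toep_entry; auto.
    - rewrite Cmod_0. destruct (in_band L i j); lra. }
  split; [|split].
  - intros i j _ _. unfold madd. destruct (inner_col n L j); destruct (D i j); unfold Cplus, RtoC; simpl; f_equal; ring.
  - apply rank_le_of_cols with (s := fun l => if Nat.ltb l L then l else (n + l - 2 * L)%nat).
    intros j Hj. destruct (inner_col n L j) eqn:Hm; [right; intros; auto|left].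
    unfold inner_col in Hm. apply Bool.andb_false_iff in Hm. destruct (lt_dec j L).
    + exists j. split; [lia|]. destruct (Nat.ltb_spec j L); lia.
    + exists (j + 2 * L - n)%nat.
      destruct Hm as [Hm|Hm]; [apply Nat.leb_gt in Hm|apply Nat.ltb_ge in Hm]; try lia.
      split; [lia|]. destruct (Nat.ltb_spec (j + 2 * L - n) L); lia.
  - apply spec_of_form_le; [apply Rmult_le_pos; auto; apply pos_INR|]. apply form_le_schur.
    + intros i Hi. apply (band_sum n i L); auto.
    + intros j Hj. apply (band_sum n j L); auto. intros i Hi. rewrite in_band_sym. auto.
Qed.

Lemma spec_toeplitz n f F0 : Ccont f -> 0 <= F0 -> (forall t, -PI <= t <= PI -> Cmod (f t) <= F0) ->
  spec_norm_le n (toeplitz n f) F0.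
Proof. intros. apply spec_of_form_le, toep_form_le; auto. Qed.

Lemma spec_opt_circ n f F0 : (0 < n)%nat -> Ccont f -> 0 <= F0 ->
  (forall t, -PI <= t <= PI -> Cmod (f t) <= F0) -> spec_norm_le n (opt_circ n f) F0.
Proof. intros. apply spec_of_form_le, circ_form_le, toep_form_le; auto. Qed.

Lemma band_error_le L C e n : 0 < e -> 4 * INR L * INR L * C / e <= INR n ->
  INR (2 * L) * (INR L * C / INR n) <= e / 2.
Proof.
  intros He HN. assert (0 <= INR L) by apply pos_INR.
  assert (H4 : 4 * INR L * INR L * C <= e * INR n).
  { apply Rmult_le_compat_r with (r := e) in HN; [|lra].
    unfold Rdiv in HN. rewrite Rmult_assoc, Rinv_l in HN by lra. nra. }
  destruct (Req_dec (INR n) 0) as [Hn|Hn].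
  - rewrite Hn in *. unfold Rdiv. rewrite Rinv_0, !Rmult_0_r. lra.
  - assert (0 < INR n) by (assert (0 <= INR n) by apply pos_INR; lra).
    rewrite mult_INR. simpl (INR 2).
    apply Rmult_le_reg_r with (INR n); auto. unfold Rdiv. rewrite !Rmult_assoc, Rinv_l by lra. nra.
Qed.

(* Split [f] into a Fejer mean [p] of degree < L and a uniformly small remainder [f - p]. *)
Lemma opt_circ_sub_toeplitz_split f : Ccont f -> (forall t, f (t + 2 * PI) = f t) ->
  forall e, 0 < e -> exists L N, (1 <= L)%nat /\ forall n, (N < n)%nat ->
    exists Rm Em, meq n (opt_circ n f) (madd (madd (toeplitz n f) Em) Rm) /\
      rank_le n Rm (2 * L) /\ spec_norm_le n Em e.
Proof.
  intros Hf Hper e He. destruct (Ccont_bounded f Hf) as [F0 [HF0 HFb]].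
  destruct (fejer_approx f Hf Hper (e / 4) ltac:(lra)) as [L [HL Happ]].
  set (p := fejer_mean L (fourier f)). set (g := fun t => Cminus (f t) (p t)).
  assert (Hp : Ccont p) by apply Ccont_fejer_mean. assert (Hg : Ccont g) by (apply Ccont_minus; auto).
  set (C := F0 + e / 4).
  assert (Hb : forall k, Cmod (fourier p k) <= C).
  { intros k. apply fourier_bound; auto. intros t Ht. replace (p t) with (Cminus (f t) (g t)) by (unfold g; cring).
    unfold Cminus. eapply Rle_trans; [apply Cmod_triangle|]. rewrite Cmod_opp.
    apply Rplus_le_compat; [apply HFb|apply Happ]; auto. }
  assert (Hsplit : fourier f = fun k => Cplus (fourier g k) (fourier p k)).
  { apply functional_extensionality; intro k. rewrite <- fourier_plus by auto. f_equal.
    apply functional_extensionality; intro t. unfold g. cring. }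
  destruct (nat_unbounded (4 * INR L * INR L * C / e)) as [N HN].
  exists L, N. split; [auto|]. intros n Hn. assert (HNn : INR N <= INR n) by (apply le_INR; lia).
  destruct (circ_sub_toep_band_split n L (fourier p) C ltac:(lia) (fun k => fourier_fejer_mean L _ k) Hb
    ltac:(unfold C; lra)) as [Rm [Em [HDm [HRm HEm]]]].
  set (Dg := msub (circ_mat n (fourier g)) (toep_mat (fourier g))).
  assert (HDg : spec_norm_le n Dg (e / 4 + e / 4)).
  { apply spec_msub; try lra; apply spec_of_form_le; try lra;
      [apply circ_form_le; [lia|]|]; apply toep_form_le; auto. }
  assert (HEm' : spec_norm_le n Em (e / 2))
    by (eapply spec_mono; [apply band_error_le|exact HEm]; lra).
  exists Rm, (madd Dg Em). split; [|split]; auto.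
  - intros i j Hi Hj.
    change (circ_mat n (fourier f) i j = madd (madd (toep_mat (fourier f)) (madd Dg Em)) Rm i j).
    rewrite Hsplit, circ_mat_plus.
    transitivity (Cplus (Cplus (toep_mat (fun k => Cplus (fourier g k) (fourier p k)) i j) (Dg i j))
      (msub (circ_mat n (fourier p)) (toep_mat (fourier p)) i j)).
    + unfold Dg, msub, madd, toep_mat. cring.
    + rewrite HDm by auto. unfold madd. cring.
  - replace e with ((e / 4 + e / 4) + e / 2) by lra. apply spec_add; auto; lra.
Qed.

Theorem mainTheorem9 (f : R -> Cpx) (hf : in_C2pi f) :
  forall eps : R, 0 < eps ->
  exists N M : nat, (0 < N)%nat /\ (0 < M)%nat /\
  forall n : nat, (N < n)%nat ->
    exists Rn En : mat,
      (forall i j, (i < n)%nat -> (j < n)%nat ->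
         Csub (mcos n (opt_circ n f) i j) (mcos n (toeplitz n f) i j)
         = Cadd (Rn i j) (En i j)) /\
      rank_le n Rn (2 * M) /\
      spec_norm_le n En eps.
Proof.
  intros eps Heps. destruct hf as [Hc1 [Hc2 Hper]]. assert (Hf : Ccont f) by (split; auto).
  destruct (Ccont_bounded f Hf) as [F0 [HF0 HFb]].
  destruct (mcos_sub_split F0 eps HF0 Heps) as [K [e [HK [He Hcos]]]].
  destruct (opt_circ_sub_toeplitz_split f Hf Hper e He) as [L [N [HL HCT]]].
  exists (S N), (S K * (2 * K) * L)%nat. split; [lia|]. split; [apply Nat.mul_pos_pos; [apply Nat.mul_pos_pos|]; lia|].
  intros n Hn. destruct (HCT n ltac:(lia)) as [Rm [Em [HD [HRm HEm]]]].
  destruct (Hcos n (opt_circ n f) (toeplitz n f) Em Rm (2 * L)%nat) as [Rn [En [Hsplit [HRn HEn]]]]; auto.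
  - apply spec_opt_circ; auto. lia.
  - apply spec_toeplitz; auto.
  - exists Rn, En. split; [exact Hsplit|split; auto].
    replace (2 * (S K * (2 * K) * L))%nat with (S K * (2 * K * (2 * L)))%nat by ring. auto.
Qed.
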